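(* Let $A$ be a simple cusp algebra, let $\alpha \in \mathbb{D}\setminus\{0\}$, and let $\psi_\alpha \in A$ be a function with a simple zero at $\alpha$ and no other zeroes in $\mathbb{D}$. If $f \in A$ and $f(\alpha) = 0$, then $f/\psi_\alpha \in A$.
   Context: $\mathbb{D}$ is the open unit disk, $O(\mathbb{D})$ the holomorphic functions on it. A cusp algebra is a unital subalgebra $A \subseteq O(\mathbb{D})$ with $\dim(O(\mathbb{D})/A) < \infty$ and $z^m O(\mathbb{D}) \subseteq A$ for some $m \ge 2$. It is simple if $\max\{n : f^{(j)}(0)=0\ \forall f\in A,\ 1\le j\le n\} = 1$. (Such a $\psi_\alpha$ exists for every $\alpha \in \mathbb{D}\setminus\{0\}$.) *)

From Stdlib Require Import Reals List.
Open Scope R_scope.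

Definition Cpx := (R * R)%type.
Definition C0 : Cpx := (0, 0).
Definition C1 : Cpx := (1, 0).
Definition Cadd (z w : Cpx) : Cpx := (fst z + fst w, snd z + snd w).
Definition Copp (z : Cpx) : Cpx := (- fst z, - snd z).
Definition Csub (z w : Cpx) : Cpx := Cadd z (Copp w).
Definition Cmul (z w : Cpx) : Cpx :=
  (fst z * fst w - snd z * snd w, fst z * snd w + snd z * fst w).
Definition Cinv (z : Cpx) : Cpx :=
  (fst z / (fst z * fst z + snd z * snd z),
   - snd z / (fst z * fst z + snd z * snd z)).
Definition Cdiv (z w : Cpx) : Cpx := Cmul z (Cinv w).
Definition Cnorm (z : Cpx) : R := sqrt (fst z * fst z + snd z * snd z).
Fixpoint Cpow (z : Cpx) (n : nat) : Cpx :=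
  match n with O => C1 | S k => Cmul z (Cpow z k) end.

Definition inD (z : Cpx) : Prop := Cnorm z < 1.

Definition has_cderiv (f : Cpx -> Cpx) (z l : Cpx) : Prop :=
  forall eps, 0 < eps -> exists del, 0 < del /\
    forall h, h <> C0 -> Cnorm h < del -> inD (Cadd z h) ->
      Cnorm (Csub (Cdiv (Csub (f (Cadd z h)) (f z)) h) l) < eps.

Definition holo (f : Cpx -> Cpx) : Prop :=
  forall z, inD z -> exists l, has_cderiv f z l.

Definition deriv_on (f g : Cpx -> Cpx) : Prop :=
  forall z, inD z -> has_cderiv f z (g z).

(* nth_deriv n f g : g is (a representative on D of) f^{(n)} *)
Fixpoint nth_deriv (n : nat) (f g : Cpx -> Cpx) : Prop :=
  match n with
  | O => forall z, inD z -> g z = f z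
  | S k => exists h, nth_deriv k f h /\ deriv_on h g
  end.

Definition deriv_vanishes (f : Cpx -> Cpx) (n : nat) (w : Cpx) : Prop :=
  forall g, nth_deriv n f g -> g w = C0.

(* A subset of O(D) is modelled as a predicate on Cpx -> Cpx that only depends on
   the values on D. *)
Definition unital_subalgebra (A : (Cpx -> Cpx) -> Prop) : Prop :=
  (forall f, A f -> holo f) /\
  (forall f g, A f -> (forall z, inD z -> f z = g z) -> A g) /\
  A (fun _ => C1) /\
  (forall f g, A f -> A g -> A (fun z => Cadd (f z) (g z))) /\
  (forall (c : Cpx) f, A f -> A (fun z => Cmul c (f z))) /\
  (forall f g, A f -> A g -> A (fun z => Cmul (f z) (g z))).

Fixpoint lin_comb (cs : list Cpx) (gs : list (Cpx -> Cpx)) (z : Cpx) : Cpx :=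
  match cs, gs with
  | c :: cs', g :: gs' => Cadd (Cmul c (g z)) (lin_comb cs' gs' z)
  | _, _ => C0
  end.

(* dim (O(D)/A) < infinity: O(D) = A + span of finitely many functions *)
Definition finite_codim (A : (Cpx -> Cpx) -> Prop) : Prop :=
  exists gs : list (Cpx -> Cpx), Forall holo gs /\
    forall f, holo f -> exists a cs, A a /\ length cs = length gs /\
      forall z, inD z -> f z = Cadd (a z) (lin_comb cs gs z).

Definition cusp_algebra (A : (Cpx -> Cpx) -> Prop) : Prop :=
  unital_subalgebra A /\ finite_codim A /\
  exists m : nat, (2 <= m)%nat /\
    forall h, holo h -> A (fun z => Cmul (Cpow z m) (h z)).

Definition vanishing_order_ok (A : (Cpx -> Cpx) -> Prop) (n : nat) : Prop :=
  forall f, A f -> forall j, (1 <= j <= n)%nat -> deriv_vanishes f j C0.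

(* max { n | P n } = 1 *)
Definition simple_cusp (A : (Cpx -> Cpx) -> Prop) : Prop :=
  vanishing_order_ok A 1 /\ forall n, vanishing_order_ok A n -> (n <= 1)%nat.

From Pilot Require Import Defs.
From Stdlib Require Import Reals List.
From Stdlib Require Import Lra Psatz ClassicalEpsilon FunctionalExtensionality Field Ring.
Open Scope R_scope.

(* The algebraic argument is short (section CuspAlgebra): g := f / psi is holomorphic;
   writing 1 - psi / psi(0) = z rho, one has (1 - psi / psi(0))^m = 1 - psi p with p in A,
   hence g = f p + z^m (g rho^m) lies in A.

   The analytic input is the division theorem: for F holomorphic on D and a in D, the
   difference quotient (F z - F a) / (z - a) extends holomorphically across a.  Expanding the
   Cauchy kernel to third order gives second-order Taylor expansions of Cauchy transforms,
   hence (dividing by the nonvanishing winding integral) of every holomorphic function,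
   and such an expansion makes the difference quotient differentiable at a. *)

(* [C1] is also a constant of the Reals library; here it denotes the complex unit. *)
Local Notation C1 := Defs.C1.

Lemma Cpx_eq (a b c d : R) : a = c -> b = d -> (a, b) = (c, d).
Proof. intros -> ->; reflexivity. Qed.

Ltac destruct_cpx := repeat match goal with z : Cpx |- _ => destruct z end.

Lemma Cring : ring_theory C0 C1 Cadd Cmul Csub Copp (@eq Cpx).
Proof.
  constructor; intros; destruct_cpx; unfold C0, C1, Cadd, Cmul, Csub, Copp; simpl;
    try reflexivity; apply Cpx_eq; ring.
Qed.

Lemma Cfield : field_theory C0 C1 Cadd Cmul Csub Copp Cdiv Cinv (@eq Cpx).
Proof.
  constructor.
  - exact Cring.
  - unfold C0, C1; intro E; injection E; lra.
  - reflexivity.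
  - intros [x y] Hz; unfold Cinv, Cmul, C1; simpl.
    assert (Hn : x * x + y * y <> 0).
    { intro E; apply Hz; apply Cpx_eq; nra. }
    apply Cpx_eq; field; exact Hn.
Qed.

Add Field Cfld : Cfield.

Lemma Csub_eq0 (w z : Cpx) : Csub w z = C0 -> w = z.
Proof. intro E; replace w with (Cadd (Csub w z) z) by ring; rewrite E; ring. Qed.

Lemma sub_neq0 (w z : Cpx) : w <> z -> Csub w z <> C0.
Proof. intros Hne E; apply Hne, Csub_eq0, E. Qed.

Lemma Cnorm_ge0 (z : Cpx) : 0 <= Cnorm z.
Proof. apply sqrt_pos. Qed.

Lemma Cnorm_sq (z : Cpx) : Cnorm z * Cnorm z = fst z * fst z + snd z * snd z.
Proof. apply sqrt_sqrt; nra. Qed.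

Lemma Cnorm_C0 : Cnorm C0 = 0.
Proof. unfold Cnorm, C0; simpl; replace (0 * 0 + 0 * 0) with 0 by ring; apply sqrt_0. Qed.

Lemma Cnorm_eq0 (z : Cpx) : Cnorm z = 0 -> z = C0.
Proof.
  destruct z as [x y]; intro E; pose proof (Cnorm_sq (x, y)) as Hsq.
  rewrite E in Hsq; simpl in Hsq; apply Cpx_eq; nra.
Qed.

Lemma Cnorm_pos (z : Cpx) : z <> C0 -> 0 < Cnorm z.
Proof.
  intro Hz; destruct (Cnorm_ge0 z) as [Hlt | E]; [exact Hlt|].
  exfalso; apply Hz, Cnorm_eq0; auto.
Qed.

Lemma Cnorm_pos_neq0 (z : Cpx) : 0 < Cnorm z -> z <> C0.
Proof. intros Hz ->; rewrite Cnorm_C0 in Hz; lra. Qed.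

Lemma Cnorm_mul (z w : Cpx) : Cnorm (Cmul z w) = Cnorm z * Cnorm w.
Proof.
  destruct z as [a b], w as [c d]; unfold Cnorm, Cmul; simpl.
  rewrite <- sqrt_mult by nra; f_equal; ring.
Qed.

(* The Cauchy-Schwarz inequality a c + b d <= |(a,b)| |(c,d)| gives the triangle inequality. *)
Lemma Cnorm_tri (z w : Cpx) : Cnorm (Cadd z w) <= Cnorm z + Cnorm w.
Proof.
  destruct z as [a b], w as [c d].
  pose proof (Cnorm_ge0 (a, b)); pose proof (Cnorm_ge0 (c, d)).
  pose proof (Cnorm_sq (a, b)) as Hu; pose proof (Cnorm_sq (c, d)) as Hv.
  pose proof (Cnorm_ge0 (Cadd (a, b) (c, d))); pose proof (Cnorm_sq (Cadd (a, b) (c, d))).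
  unfold Cadd in *; simpl in *.
  set (u := Cnorm (a, b)) in *; set (v := Cnorm (c, d)) in *.
  assert (Hcs : a * c + b * d <= u * v).
  { assert (Hsq : (a * c + b * d) * (a * c + b * d) <= (u * v) * (u * v)).
    { replace ((u * v) * (u * v)) with ((u * u) * (v * v)) by ring; rewrite Hu, Hv.
      pose proof (Rle_0_sqr (a * d - b * c)); unfold Rsqr in *; nra. }
    destruct (Rle_dec (a * c + b * d) 0); [nra|].
    apply Rsqr_incr_0_var; unfold Rsqr; nra. }
  apply Rsqr_incr_0_var; unfold Rsqr; nra.
Qed.

Lemma Cnorm_opp (z : Cpx) : Cnorm (Copp z) = Cnorm z.
Proof. destruct z as [a b]; unfold Cnorm, Copp; simpl; f_equal; ring. Qed.

Lemma Cnorm_sub_sym (z w : Cpx) : Cnorm (Csub z w) = Cnorm (Csub w z).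
Proof. replace (Csub z w) with (Copp (Csub w z)) by ring; apply Cnorm_opp. Qed.

Lemma Cnorm_sub_le (z w : Cpx) : Cnorm (Csub z w) <= Cnorm z + Cnorm w.
Proof. unfold Csub; rewrite <- (Cnorm_opp w); apply Cnorm_tri. Qed.

Lemma Cnorm_sub_tri (z w : Cpx) : Cnorm z - Cnorm w <= Cnorm (Csub z w).
Proof.
  pose proof (Cnorm_tri (Csub z w) w) as Ht.
  replace (Cadd (Csub z w) w) with z in Ht by ring; lra.
Qed.

Lemma Cnorm_fst (z : Cpx) : Rabs (fst z) <= Cnorm z.
Proof.
  destruct z as [a b]; pose proof (Cnorm_ge0 (a, b)); pose proof (Cnorm_sq (a, b)); simpl in *.
  apply Rsqr_incr_0_var; [|auto]; rewrite <- Rsqr_abs; unfold Rsqr; nra.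
Qed.

Lemma Cnorm_snd (z : Cpx) : Rabs (snd z) <= Cnorm z.
Proof.
  destruct z as [a b]; pose proof (Cnorm_ge0 (a, b)); pose proof (Cnorm_sq (a, b)); simpl in *.
  apply Rsqr_incr_0_var; [|auto]; rewrite <- Rsqr_abs; unfold Rsqr; nra.
Qed.

Lemma Cnorm_le_abs (z : Cpx) : Cnorm z <= Rabs (fst z) + Rabs (snd z).
Proof.
  destruct z as [a b]; pose proof (Cnorm_ge0 (a, b)); pose proof (Cnorm_sq (a, b)); simpl in *.
  pose proof (Rabs_pos a); pose proof (Rabs_pos b).
  assert (Rabs a * Rabs a = a * a) by (rewrite <- Rabs_mult; apply Rabs_right; nra).
  assert (Rabs b * Rabs b = b * b) by (rewrite <- Rabs_mult; apply Rabs_right; nra).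
  apply Rsqr_incr_0_var; [|nra]; unfold Rsqr; nra.
Qed.

Lemma Cnorm_real (x : R) : Cnorm (x, 0) = Rabs x.
Proof.
  unfold Cnorm; simpl; rewrite <- sqrt_Rsqr_abs; f_equal; unfold Rsqr; ring.
Qed.

Lemma Cnorm_imag (x : R) : Cnorm (0, x) = Rabs x.
Proof.
  unfold Cnorm; simpl; rewrite <- sqrt_Rsqr_abs; f_equal; unfold Rsqr; ring.
Qed.

Lemma Cnorm_one : Cnorm C1 = 1.
Proof. unfold C1; rewrite Cnorm_real; apply Rabs_R1. Qed.

Lemma Cnorm_inv (z : Cpx) : z <> C0 -> Cnorm (Cinv z) = / Cnorm z.
Proof.
  intro Hz; pose proof (Cnorm_pos z Hz).
  assert (Hone : Cnorm (Cmul z (Cinv z)) = 1).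
  { replace (Cmul z (Cinv z)) with C1 by (field; auto); apply Cnorm_one. }
  rewrite Cnorm_mul in Hone; field_simplify_eq; lra.
Qed.

Lemma Cnorm_div (z w : Cpx) : w <> C0 -> Cnorm (Cdiv z w) = Cnorm z / Cnorm w.
Proof. intro Hw; unfold Cdiv; rewrite Cnorm_mul, Cnorm_inv; auto. Qed.

Lemma Cmul_neq0 (z w : Cpx) : z <> C0 -> w <> C0 -> Cmul z w <> C0.
Proof.
  intros Hz Hw; apply Cnorm_pos_neq0; rewrite Cnorm_mul.
  apply Rmult_lt_0_compat; apply Cnorm_pos; auto.
Qed.

Lemma Cnorm_box (x y px py dx dy : R) :
  Rabs (x - px) <= dx -> Rabs (y - py) <= dy -> Cnorm (Csub (x, y) (px, py)) <= dx + dy.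
Proof.
  intros Hx Hy; eapply Rle_trans; [apply Cnorm_le_abs|]; simpl.
  unfold Rminus in Hx, Hy; lra.
Qed.

Ltac solve_rmin :=
  first [ apply Rle_refl
        | eapply Rle_trans; [apply Rmin_l|]; solve_rmin
        | eapply Rle_trans; [apply Rmin_r|]; solve_rmin ].

Lemma Cpow_mul (x y : Cpx) (n : nat) : Cpow (Cmul x y) n = Cmul (Cpow x n) (Cpow y n).
Proof. induction n as [|n IH]; simpl; [|rewrite IH]; ring. Qed.

Definition ccont (f : Cpx -> Cpx) (z : Cpx) : Prop :=
  forall e, 0 < e -> exists d, 0 < d /\
    forall w, Cnorm (Csub w z) < d -> Cnorm (Csub (f w) (f z)) < e.

Definition Ceq_dec (z w : Cpx) : {z = w} + {z <> w}.
Proof.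
  destruct z as [a b], w as [c d].
  destruct (Req_EM_T a c) as [-> | Hac]; [destruct (Req_EM_T b d) as [-> | Hbd]|].
  - left; reflexivity.
  - right; intro E; injection E; auto.
  - right; intro E; injection E; auto.
Defined.

Lemma ccont_local (f g : Cpx -> Cpx) (z : Cpx) (r : R) : 0 < r ->
  (forall w, Cnorm (Csub w z) < r -> f w = g w) -> ccont f z -> ccont g z.
Proof.
  intros Hr Heq Hf e He; destruct (Hf e He) as [d [Hd Hw]].
  exists (Rmin d r); split; [apply Rmin_pos; auto|]; intros w Hwz.
  assert (Hzz : Cnorm (Csub z z) < r).
  { replace (Csub z z) with C0 by ring; rewrite Cnorm_C0; auto. }
  rewrite <- (Heq w), <- (Heq z) by
    (first [exact Hzz | eapply Rlt_le_trans; [exact Hwz | apply Rmin_r]]).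
  apply Hw; eapply Rlt_le_trans; [exact Hwz | apply Rmin_l].
Qed.

Lemma ccont_ext (f g : Cpx -> Cpx) (z : Cpx) : (forall w, f w = g w) -> ccont f z -> ccont g z.
Proof. intro Heq; apply (ccont_local f g z 1); auto; lra. Qed.

Lemma ccont_const (c z : Cpx) : ccont (fun _ => c) z.
Proof.
  intros e He; exists 1; split; [lra|]; intros.
  replace (Csub c c) with C0 by ring; rewrite Cnorm_C0; auto.
Qed.

Lemma ccont_id (z : Cpx) : ccont (fun w => w) z.
Proof. intros e He; exists e; split; auto. Qed.

Lemma ccont_add (f g : Cpx -> Cpx) (z : Cpx) :
  ccont f z -> ccont g z -> ccont (fun w => Cadd (f w) (g w)) z.
Proof.
  intros Hf Hg e He.
  destruct (Hf (e / 2)) as [d1 [Hd1 H1]]; [lra|].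
  destruct (Hg (e / 2)) as [d2 [Hd2 H2]]; [lra|].
  exists (Rmin d1 d2); split; [apply Rmin_pos; auto|]; intros w Hw.
  replace (Csub (Cadd (f w) (g w)) (Cadd (f z) (g z)))
    with (Cadd (Csub (f w) (f z)) (Csub (g w) (g z))) by ring.
  eapply Rle_lt_trans; [apply Cnorm_tri|].
  specialize (H1 w ltac:(eapply Rlt_le_trans; [apply Hw | apply Rmin_l])).
  specialize (H2 w ltac:(eapply Rlt_le_trans; [apply Hw | apply Rmin_r])).
  lra.
Qed.

(* f w g w - f z g z = (df)(dg) + (df) g z + f z (dg), each term small when df, dg are. *)
Lemma ccont_mul (f g : Cpx -> Cpx) (z : Cpx) :
  ccont f z -> ccont g z -> ccont (fun w => Cmul (f w) (g w)) z.
Proof.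
  intros Hf Hg e He.
  set (K := 1 + Cnorm (f z) + Cnorm (g z)).
  pose proof (Cnorm_ge0 (f z)); pose proof (Cnorm_ge0 (g z)).
  assert (HK : 1 <= K) by (unfold K; lra).
  set (eta := Rmin 1 (e / (2 * K))).
  assert (Heta : 0 < eta) by (apply Rmin_pos; [lra | apply Rdiv_lt_0_compat; lra]).
  assert (Heta1 : eta <= 1) by apply Rmin_l.
  assert (HetaK : eta * K <= e / 2).
  { replace (e / 2) with ((e / (2 * K)) * K) by (field; lra).
    apply Rmult_le_compat_r; [lra | apply Rmin_r]. }
  destruct (Hf eta Heta) as [d1 [Hd1 H1]]; destruct (Hg eta Heta) as [d2 [Hd2 H2]].
  exists (Rmin d1 d2); split; [apply Rmin_pos; auto|]; intros w Hw.
  specialize (H1 w ltac:(eapply Rlt_le_trans; [apply Hw | apply Rmin_l])).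
  specialize (H2 w ltac:(eapply Rlt_le_trans; [apply Hw | apply Rmin_r])).
  replace (Csub (Cmul (f w) (g w)) (Cmul (f z) (g z))) with
    (Cadd (Cmul (Csub (f w) (f z)) (Csub (g w) (g z)))
      (Cadd (Cmul (Csub (f w) (f z)) (g z)) (Cmul (f z) (Csub (g w) (g z))))) by ring.
  eapply Rle_lt_trans; [apply Cnorm_tri|].
  eapply Rle_lt_trans; [apply Rplus_le_compat_l, Cnorm_tri|].
  rewrite !Cnorm_mul.
  pose proof (Cnorm_ge0 (Csub (f w) (f z))); pose proof (Cnorm_ge0 (Csub (g w) (g z))).
  unfold K in HetaK; nra.
Qed.

Lemma ccont_sub (f g : Cpx -> Cpx) (z : Cpx) :
  ccont f z -> ccont g z -> ccont (fun w => Csub (f w) (g w)) z.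
Proof.
  intros Hf Hg; apply ccont_ext with (fun w => Cadd (f w) (Cmul (Copp C1) (g w))).
  - intros; ring.
  - apply ccont_add; auto; apply ccont_mul; auto; apply ccont_const.
Qed.

Lemma ccont_nonzero (g : Cpx -> Cpx) (z : Cpx) : ccont g z -> g z <> C0 ->
  exists r, 0 < r /\ forall w, Cnorm (Csub w z) < r -> g w <> C0.
Proof.
  intros Hg Hz; pose proof (Cnorm_pos _ Hz).
  destruct (Hg (Cnorm (g z))) as [d [Hd Hw]]; auto.
  exists d; split; auto; intros w Hwz E; specialize (Hw w Hwz); rewrite E in Hw.
  replace (Csub C0 (g z)) with (Copp (g z)) in Hw by ring; rewrite Cnorm_opp in Hw; lra.
Qed.

(* |1/g w - 1/g z| = |g z - g w| / (|g w| |g z|) and |g w| > |g z| / 2 near z. *)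
Lemma ccont_inv (g : Cpx -> Cpx) (z : Cpx) :
  ccont g z -> g z <> C0 -> ccont (fun w => Cinv (g w)) z.
Proof.
  intros Hg Hz e He; pose proof (Cnorm_pos _ Hz) as Hp; set (m := Cnorm (g z)) in *.
  set (eta := Rmin (m / 2) (e * m * m / 2)).
  assert (Heta : 0 < eta).
  { apply Rmin_pos; [lra|]; apply Rdiv_lt_0_compat; [|lra].
    apply Rmult_lt_0_compat; [apply Rmult_lt_0_compat|]; lra. }
  assert (Heta1 : eta <= m / 2) by apply Rmin_l.
  assert (Heta2 : eta <= e * m * m / 2) by apply Rmin_r.
  destruct (Hg eta Heta) as [d [Hd Hball]]; exists d; split; auto; intros w Hw.
  specialize (Hball w Hw); rewrite Cnorm_sub_sym in Hball.
  pose proof (Cnorm_sub_tri (g z) (g w)) as Htri; fold m in Htri.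
  assert (Hgw : m / 2 < Cnorm (g w)) by lra.
  assert (Hgw0 : g w <> C0) by (apply Cnorm_pos_neq0; lra).
  replace (Csub (Cinv (g w)) (Cinv (g z)))
    with (Cdiv (Csub (g z) (g w)) (Cmul (g w) (g z))) by (field; auto).
  rewrite Cnorm_div by (apply Cmul_neq0; auto); rewrite Cnorm_mul; fold m.
  apply Rlt_le_trans with (eta / (m / 2 * m)).
  - apply Rlt_le_trans with (eta / (Cnorm (g w) * m)).
    + unfold Rdiv; apply Rmult_lt_compat_r; auto; apply Rinv_0_lt_compat; nra.
    + unfold Rdiv; apply Rmult_le_compat_l; [lra|]; apply Rinv_le_contravar; nra.
  - apply Rle_trans with ((e * m * m / 2) / (m / 2 * m)); [|right; field; lra].
    unfold Rdiv; apply Rmult_le_compat_r; [left; apply Rinv_0_lt_compat; nra | lra].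
Qed.

(** * Complex differentiability, Caratheodory style

   [f] is differentiable at [z] with derivative [l] iff the difference quotient
   [slope f z l], extended by [l] at [z], is continuous at [z].  This makes
   all differentiation rules consequences of the continuity rules. *)

Definition slope (f : Cpx -> Cpx) (z l : Cpx) (w : Cpx) : Cpx :=
  if Ceq_dec w z then l else Cdiv (Csub (f w) (f z)) (Csub w z).

Definition cdif (f : Cpx -> Cpx) (z l : Cpx) : Prop := ccont (slope f z l) z.

Lemma slope_id (f : Cpx -> Cpx) (z l w : Cpx) :
  f w = Cadd (f z) (Cmul (slope f z l w) (Csub w z)).
Proof.
  unfold slope; destruct (Ceq_dec w z) as [-> | Hne]; [ring | field; apply sub_neq0; auto].
Qed.

Lemma slope_at (f : Cpx -> Cpx) (z l : Cpx) : slope f z l z = l.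
Proof. unfold slope; destruct (Ceq_dec z z); congruence. Qed.

Lemma slope_ne (f : Cpx -> Cpx) (z l w : Cpx) :
  w <> z -> slope f z l w = Cdiv (Csub (f w) (f z)) (Csub w z).
Proof. intro Hne; unfold slope; destruct (Ceq_dec w z); congruence. Qed.

Lemma cdif_cont (f : Cpx -> Cpx) (z l : Cpx) : cdif f z l -> ccont f z.
Proof.
  intro Hd; apply ccont_ext with (fun w => Cadd (f z) (Cmul (slope f z l w) (Csub w z))).
  - intro w; symmetry; apply slope_id.
  - apply ccont_add; [apply ccont_const|]; apply ccont_mul; [exact Hd|].
    apply ccont_sub; [apply ccont_id | apply ccont_const].
Qed.

Lemma cdif_intro (f : Cpx -> Cpx) (z l : Cpx) (s : Cpx -> Cpx) (r : R) :
  0 < r -> ccont s z -> s z = l ->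
  (forall w, Cnorm (Csub w z) < r -> w <> z -> Csub (f w) (f z) = Cmul (s w) (Csub w z)) ->
  cdif f z l.
Proof.
  intros Hr Hs Hsz Hw; apply (ccont_local s _ z r Hr); auto; intros w Hwz.
  destruct (Ceq_dec w z) as [-> | Hne].
  - rewrite slope_at; auto.
  - rewrite slope_ne, Hw by auto; field; apply sub_neq0; auto.
Qed.

Lemma cdif_local (f g : Cpx -> Cpx) (z l : Cpx) (r : R) : 0 < r ->
  (forall w, Cnorm (Csub w z) < r -> f w = g w) -> cdif g z l -> cdif f z l.
Proof.
  intros Hr Heq Hg; apply (cdif_intro f z l (slope g z l) r); auto using slope_at.
  intros w Hw _; rewrite (Heq w Hw), (Heq z).
  - rewrite (slope_id g z l w) at 1; ring.
  - replace (Csub z z) with C0 by ring; rewrite Cnorm_C0; auto.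
Qed.

Lemma cdif_const (c z : Cpx) : cdif (fun _ => c) z C0.
Proof.
  apply (cdif_intro _ z C0 (fun _ => C0) 1); auto using ccont_const; [lra|]; intros; ring.
Qed.

Lemma cdif_id (z : Cpx) : cdif (fun w => w) z C1.
Proof.
  apply (cdif_intro _ z C1 (fun _ => C1) 1); auto using ccont_const; [lra|]; intros; ring.
Qed.

Lemma cdif_mul (f g : Cpx -> Cpx) (z lf lg : Cpx) : cdif f z lf -> cdif g z lg ->
  cdif (fun w => Cmul (f w) (g w)) z (Cadd (Cmul lf (g z)) (Cmul (f z) lg)).
Proof.
  intros Hf Hg.
  apply (cdif_intro _ z _
           (fun w => Cadd (Cmul (slope f z lf w) (g w)) (Cmul (f z) (slope g z lg w))) 1).
  - lra.
  - apply ccont_add; apply ccont_mul; eauto using cdif_cont, ccont_const.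
  - rewrite !slope_at; auto.
  - intros w _ _; rewrite (slope_id f z lf w) at 1; rewrite (slope_id g z lg w); ring.
Qed.

Lemma cdif_sub (f g : Cpx -> Cpx) (z lf lg : Cpx) : cdif f z lf -> cdif g z lg ->
  cdif (fun w => Csub (f w) (g w)) z (Csub lf lg).
Proof.
  intros Hf Hg.
  apply (cdif_intro _ z _ (fun w => Csub (slope f z lf w) (slope g z lg w)) 1);
    [lra | apply ccont_sub; auto | rewrite !slope_at; auto |].
  intros w _ _; rewrite (slope_id f z lf w) at 1; rewrite (slope_id g z lg w); ring.
Qed.

Lemma cdif_inv (g : Cpx -> Cpx) (z l : Cpx) : cdif g z l -> g z <> C0 ->
  cdif (fun w => Cinv (g w)) z (Copp (Cmul l (Cmul (Cinv (g z)) (Cinv (g z))))).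
Proof.
  intros Hg Hz; pose proof (cdif_cont _ _ _ Hg) as Hc.
  destruct (ccont_nonzero g z Hc Hz) as [r [Hr Hnz]].
  apply (cdif_intro _ z _
           (fun w => Cmul (slope g z l w) (Cmul (Cinv (g w)) (Copp (Cinv (g z))))) r); auto.
  - apply ccont_mul; [exact Hg|].
    apply ccont_mul; [apply ccont_inv; auto | apply ccont_const].
  - rewrite slope_at; ring.
  - intros w Hw Hne; specialize (Hnz w Hw); rewrite slope_ne by auto.
    field; repeat split; auto; apply sub_neq0; auto.
Qed.

Definition cdiff (f : Cpx -> Cpx) (z : Cpx) : Prop := exists l, cdif f z l.

Lemma cdiff_cont (f : Cpx -> Cpx) (z : Cpx) : cdiff f z -> ccont f z.
Proof. intros [l Hl]; eapply cdif_cont; eauto. Qed.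

Lemma cdiff_const (c z : Cpx) : cdiff (fun _ => c) z.
Proof. eexists; apply cdif_const. Qed.

Lemma cdiff_mul (f g : Cpx -> Cpx) (z : Cpx) :
  cdiff f z -> cdiff g z -> cdiff (fun w => Cmul (f w) (g w)) z.
Proof. intros [l1 H1] [l2 H2]; eexists; apply cdif_mul; eauto. Qed.

Lemma cdiff_sub (f g : Cpx -> Cpx) (z : Cpx) :
  cdiff f z -> cdiff g z -> cdiff (fun w => Csub (f w) (g w)) z.
Proof. intros [l1 H1] [l2 H2]; eexists; apply cdif_sub; eauto. Qed.

Lemma cdiff_inv (g : Cpx -> Cpx) (z : Cpx) : cdiff g z -> g z <> C0 -> cdiff (fun w => Cinv (g w)) z.
Proof. intros [l H] Hz; eexists; apply cdif_inv; eauto. Qed.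

Lemma cdiff_pow (f : Cpx -> Cpx) (z : Cpx) (n : nat) :
  cdiff f z -> cdiff (fun w => Cpow (f w) n) z.
Proof.
  intro Hf; induction n as [|n IH]; simpl; [apply cdiff_const | apply cdiff_mul; auto].
Qed.

Lemma cdiff_local (f g : Cpx -> Cpx) (z : Cpx) (r : R) : 0 < r ->
  (forall w, Cnorm (Csub w z) < r -> f w = g w) -> cdiff g z -> cdiff f z.
Proof. intros Hr Heq [l Hl]; exists l; eapply cdif_local; eauto. Qed.

Lemma cdiff_kernel (z w : Cpx) : w <> z -> cdiff (fun u => Cinv (Csub u z)) w.
Proof.
  intro Hne; apply cdiff_inv; [| apply sub_neq0; auto].
  eexists; apply cdif_sub; [apply cdif_id | apply cdif_const].
Qed.

Lemma cdiff_quotient (f : Cpx -> Cpx) (z w : Cpx) : w <> z -> cdiff f w ->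
  cdiff (fun u => Cmul (Csub (f u) (f z)) (Cinv (Csub u z))) w.
Proof.
  intros Hne Hf; apply cdiff_mul; [apply cdiff_sub; auto using cdiff_const | apply cdiff_kernel; auto].
Qed.

Lemma inD_open (z : Cpx) : inD z -> exists r, 0 < r /\ forall w, Cnorm (Csub w z) < r -> inD w.
Proof.
  unfold inD; intro Hz; exists (1 - Cnorm z); split; [lra|]; intros w Hw.
  pose proof (Cnorm_tri (Csub w z) z) as Ht; replace (Cadd (Csub w z) z) with w in Ht by ring.
  lra.
Qed.

Lemma has_cderiv_cdif (f : Cpx -> Cpx) (z l : Cpx) : inD z -> has_cderiv f z l -> cdif f z l.
Proof.
  intros Hz Hf e He; destruct (inD_open z Hz) as [r [Hr Hin]].
  destruct (Hf e He) as [d [Hd Hh]]; exists (Rmin d r); split; [apply Rmin_pos; auto|].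
  intros w Hw; rewrite slope_at; destruct (Ceq_dec w z) as [-> | Hne].
  - rewrite slope_at; replace (Csub l l) with C0 by ring; rewrite Cnorm_C0; auto.
  - rewrite slope_ne by auto; specialize (Hh (Csub w z) (sub_neq0 _ _ Hne)).
    replace (Cadd z (Csub w z)) with w in Hh by ring; apply Hh.
    + eapply Rlt_le_trans; [apply Hw | apply Rmin_l].
    + apply Hin; eapply Rlt_le_trans; [apply Hw | apply Rmin_r].
Qed.

Lemma cdif_has_cderiv (f : Cpx -> Cpx) (z l : Cpx) : cdif f z l -> has_cderiv f z l.
Proof.
  intros Hf e He; destruct (Hf e He) as [d [Hd Hh]]; exists d; split; auto.
  intros h Hh0 Hhd _; specialize (Hh (Cadd z h)).
  replace (Csub (Cadd z h) z) with h in Hh by ring; specialize (Hh Hhd).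
  rewrite slope_at, slope_ne in Hh.
  - replace (Csub (Cadd z h) z) with h in Hh by ring; exact Hh.
  - intro E; apply Hh0; replace h with (Csub (Cadd z h) z) by ring; rewrite E; ring.
Qed.

Lemma holo_cdiff (f : Cpx -> Cpx) (z : Cpx) : holo f -> inD z -> cdiff f z.
Proof.
  intros Hf Hz; destruct (Hf z Hz) as [l Hl]; exists l; apply has_cderiv_cdif; auto.
Qed.

Lemma holo_intro (f : Cpx -> Cpx) : (forall z, inD z -> cdiff f z) -> holo f.
Proof.
  intros Hf z Hz; destruct (Hf z Hz) as [l Hl]; exists l; apply cdif_has_cderiv; auto.
Qed.

(** * Integrals along segments

   [RI f a b] is the Riemann integral of [f] on [a, b] when it exists (and 0
   otherwise); it is only used for continuous integrands, for which [rint]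
   packages the hypotheses. *)

Definition inh_pick {X : Type} (H : inhabited X) : X :=
  proj1_sig (constructive_indefinite_description (fun _ : X => True)
    (match H with inhabits x => ex_intro _ x I end)).

Definition RI (f : R -> R) (a b : R) : R :=
  match excluded_middle_informative (inhabited (Riemann_integrable f a b)) with
  | left H => RiemannInt (inh_pick H)
  | right _ => 0
  end.

Lemma RI_eq (f : R -> R) (a b : R) (pr : Riemann_integrable f a b) : RI f a b = RiemannInt pr.
Proof.
  unfold RI; destruct (excluded_middle_informative _) as [H | H].
  - apply RiemannInt_P5.
  - exfalso; apply H; constructor; auto.
Qed.

Definition rint (f : R -> R) (a b : R) : Prop :=
  a <= b /\ forall t, a <= t <= b -> continuity_pt f t.

Definition rint_pr (f : R -> R) (a b : R) (H : rint f a b) : Riemann_integrable f a b :=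
  continuity_implies_RiemannInt (proj1 H) (proj2 H).

Lemma rint_const (c a b : R) : a <= b -> rint (fun _ => c) a b.
Proof. split; auto; intros; apply continuity_pt_const; intros u v; auto. Qed.

Lemma RI_lin (f g : R -> R) (a b l : R) : rint f a b -> rint g a b ->
  RI (fun t => f t + l * g t) a b = RI f a b + l * RI g a b.
Proof.
  intros Hf Hg; rewrite (RI_eq _ _ _ (rint_pr _ _ _ Hf)), (RI_eq _ _ _ (rint_pr _ _ _ Hg)).
  rewrite (RI_eq _ _ _ (RiemannInt_P10 l (rint_pr _ _ _ Hf) (rint_pr _ _ _ Hg))).
  apply RiemannInt_P13.
Qed.

Lemma RI_const (c a b : R) : RI (fun _ => c) a b = c * (b - a).
Proof.
  change (fun _ : R => c) with (fct_cte c).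
  rewrite (RI_eq _ _ _ (RiemannInt_P14 a b c)); apply RiemannInt_P15.
Qed.

Lemma RI_scal (f : R -> R) (a b l : R) : rint f a b -> RI (fun t => l * f t) a b = l * RI f a b.
Proof.
  intro Hf; pose proof (RI_lin (fun _ => 0) f a b l (rint_const 0 a b (proj1 Hf)) Hf) as Hl.
  rewrite RI_const in Hl.
  replace (fun t => l * f t) with (fun t => 0 + l * f t); [rewrite Hl; ring|].
  apply functional_extensionality; intros; ring.
Qed.

Lemma RI_chasles (f : R -> R) (a b c : R) : a <= b -> b <= c -> rint f a c ->
  RI f a b + RI f b c = RI f a c.
Proof.
  intros Hab Hbc [Hac Hf].
  assert (H1 : rint f a b) by (split; auto; intros; apply Hf; lra).
  assert (H2 : rint f b c) by (split; auto; intros; apply Hf; lra).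
  rewrite (RI_eq _ _ _ (rint_pr _ _ _ H1)), (RI_eq _ _ _ (rint_pr _ _ _ H2)),
    (RI_eq _ _ _ (rint_pr _ _ _ (conj Hac Hf))).
  apply RiemannInt_P26.
Qed.

Lemma RI_ext (f g : R -> R) (a b : R) : rint f a b -> rint g a b ->
  (forall t, a <= t <= b -> f t = g t) -> RI f a b = RI g a b.
Proof.
  intros Hf Hg Heq; rewrite (RI_eq _ _ _ (rint_pr _ _ _ Hf)), (RI_eq _ _ _ (rint_pr _ _ _ Hg)).
  apply RiemannInt_P18; [apply Hf|]; intros; apply Heq; lra.
Qed.

Lemma RI_le (f g : R -> R) (a b : R) : rint f a b -> rint g a b ->
  (forall t, a <= t <= b -> f t <= g t) -> RI f a b <= RI g a b.
Proof.
  intros Hf Hg Hle; rewrite (RI_eq _ _ _ (rint_pr _ _ _ Hf)), (RI_eq _ _ _ (rint_pr _ _ _ Hg)).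
  apply RiemannInt_P19; [apply Hf|]; intros; apply Hle; lra.
Qed.

Lemma RI_lower (f : R -> R) (a b m : R) : rint f a b ->
  (forall t, a <= t <= b -> m <= f t) -> m * (b - a) <= RI f a b.
Proof. intros Hf Hm; rewrite <- RI_const; apply RI_le; auto; apply rint_const, Hf. Qed.

Lemma RI_upper (f : R -> R) (a b m : R) : rint f a b ->
  (forall t, a <= t <= b -> f t <= m) -> RI f a b <= m * (b - a).
Proof. intros Hf Hm; rewrite <- RI_const; apply RI_le; auto; apply rint_const, Hf. Qed.

Lemma Rabs_bounds (x M : R) : Rabs x <= M -> - M <= x <= M.
Proof. unfold Rabs; destruct (Rcase_abs x); lra. Qed.

Lemma RI_bound (f : R -> R) (a b M : R) : rint f a b ->
  (forall t, a <= t <= b -> Rabs (f t) <= M) -> Rabs (RI f a b) <= M * (b - a).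
Proof.
  intros Hf HM; apply Rabs_le; split.
  - replace (- (M * (b - a))) with (- M * (b - a)) by ring.
    apply RI_lower; auto; intros t Ht; apply (Rabs_bounds _ _ (HM t Ht)).
  - apply RI_upper; auto; intros t Ht; apply (Rabs_bounds _ _ (HM t Ht)).
Qed.

Definition ccont1 (g : R -> Cpx) (t : R) : Prop :=
  forall e, 0 < e -> exists d, 0 < d /\ forall s, Rabs (s - t) < d -> Cnorm (Csub (g s) (g t)) < e.

Lemma ccont1_proj (p : Cpx -> R) (g : R -> Cpx) (t : R) :
  (forall u v, Rabs (p u - p v) <= Cnorm (Csub u v)) -> ccont1 g t ->
  continuity_pt (fun s => p (g s)) t.
Proof.
  intros Hp Hg; unfold continuity_pt, continue_in, limit1_in, limit_in; simpl; unfold R_dist.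
  intros e He; destruct (Hg e He) as [d [Hd Hs]]; exists d; split; auto.
  intros s [_ Hst]; eapply Rle_lt_trans; [apply Hp | apply (Hs s Hst)].
Qed.

Lemma ccont1_fst (g : R -> Cpx) (t : R) : ccont1 g t -> continuity_pt (fun s => fst (g s)) t.
Proof.
  apply ccont1_proj; intros u v; pose proof (Cnorm_fst (Csub u v)) as H.
  unfold Csub, Cadd, Copp in H; simpl in H; exact H.
Qed.

Lemma ccont1_snd (g : R -> Cpx) (t : R) : ccont1 g t -> continuity_pt (fun s => snd (g s)) t.
Proof.
  apply ccont1_proj; intros u v; pose proof (Cnorm_snd (Csub u v)) as H.
  unfold Csub, Cadd, Copp in H; simpl in H; exact H.
Qed.

Lemma ccont1_norm (g : R -> Cpx) (t : R) : ccont1 g t -> continuity_pt (fun s => Cnorm (g s)) t.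
Proof.
  apply ccont1_proj; intros u v; apply Rabs_le; split.
  - pose proof (Cnorm_sub_tri v u) as Ht; rewrite (Cnorm_sub_sym v u) in Ht; lra.
  - apply Cnorm_sub_tri.
Qed.

Definition cint1 (g : R -> Cpx) (a b : R) : Prop := a <= b /\ forall t, a <= t <= b -> ccont1 g t.

Definition CI (g : R -> Cpx) (a b : R) : Cpx :=
  (RI (fun t => fst (g t)) a b, RI (fun t => snd (g t)) a b).

Lemma cint1_fst (g : R -> Cpx) (a b : R) : cint1 g a b -> rint (fun t => fst (g t)) a b.
Proof. intros [Hab Hg]; split; auto; intros; apply ccont1_fst; auto. Qed.

Lemma cint1_snd (g : R -> Cpx) (a b : R) : cint1 g a b -> rint (fun t => snd (g t)) a b.
Proof. intros [Hab Hg]; split; auto; intros; apply ccont1_snd; auto. Qed.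

Lemma cint1_const (c : Cpx) (a b : R) : a <= b -> cint1 (fun _ => c) a b.
Proof.
  intro Hab; split; auto; intros t _ e He; exists 1; split; [lra|]; intros.
  replace (Csub c c) with C0 by ring; rewrite Cnorm_C0; auto.
Qed.

Lemma CI_add (g1 g2 : R -> Cpx) (a b : R) : cint1 g1 a b -> cint1 g2 a b ->
  CI (fun t => Cadd (g1 t) (g2 t)) a b = Cadd (CI g1 a b) (CI g2 a b).
Proof.
  intros H1 H2; unfold CI, Cadd; simpl; apply Cpx_eq.
  - rewrite <- (Rmult_1_l (RI (fun t => fst (g2 t)) a b)), <- RI_lin
      by (apply cint1_fst; auto).
    f_equal; apply functional_extensionality; intros; ring.
  - rewrite <- (Rmult_1_l (RI (fun t => snd (g2 t)) a b)), <- RI_lin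
      by (apply cint1_snd; auto).
    f_equal; apply functional_extensionality; intros; ring.
Qed.

Lemma CI_scal (c : Cpx) (g : R -> Cpx) (a b : R) : cint1 g a b ->
  CI (fun t => Cmul c (g t)) a b = Cmul c (CI g a b).
Proof.
  intro Hg; pose proof (cint1_fst _ _ _ Hg) as Hf; pose proof (cint1_snd _ _ _ Hg) as Hs.
  assert (Hsc : forall k (p : R -> R), rint p a b -> rint (fun t => k * p t) a b).
  { intros k p [Hab Hp]; split; auto; intros; apply continuity_pt_scal; auto. }
  unfold CI; destruct c as [c1 c2]; unfold Cmul; simpl; apply Cpx_eq.
  - replace (fun t => c1 * fst (g t) - c2 * snd (g t))
      with (fun t => c1 * fst (g t) + (- c2) * snd (g t))
      by (apply functional_extensionality; intros; ring).
    rewrite RI_lin, RI_scal by auto; ring.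
  - rewrite RI_lin, RI_scal by auto; ring.
Qed.

Lemma CI_chasles (g : R -> Cpx) (a b c : R) : a <= b -> b <= c -> cint1 g a c ->
  Cadd (CI g a b) (CI g b c) = CI g a c.
Proof.
  intros Hab Hbc Hg; unfold CI, Cadd; simpl; apply Cpx_eq; apply RI_chasles; auto.
  - apply cint1_fst; auto.
  - apply cint1_snd; auto.
Qed.

Lemma CI_const (c : Cpx) (a b : R) : CI (fun _ => c) a b = Cmul c (b - a, 0).
Proof. unfold CI, Cmul; simpl; rewrite !RI_const; apply Cpx_eq; ring. Qed.

Lemma CI_ext (g1 g2 : R -> Cpx) (a b : R) : cint1 g1 a b -> cint1 g2 a b ->
  (forall t, a <= t <= b -> g1 t = g2 t) -> CI g1 a b = CI g2 a b.
Proof.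
  intros H1 H2 Heq; unfold CI; apply Cpx_eq; apply RI_ext;
    auto using cint1_fst, cint1_snd; intros t Ht; rewrite Heq; auto.
Qed.

Lemma CI_bound (g : R -> Cpx) (a b M : R) : cint1 g a b ->
  (forall t, a <= t <= b -> Cnorm (g t) <= M) -> Cnorm (CI g a b) <= 2 * M * (b - a).
Proof.
  intros Hg HM; eapply Rle_trans; [apply Cnorm_le_abs|]; unfold CI; simpl.
  assert (Rabs (RI (fun t => fst (g t)) a b) <= M * (b - a)).
  { apply RI_bound; [apply cint1_fst; auto|]; intros.
    eapply Rle_trans; [apply Cnorm_fst | auto]. }
  assert (Rabs (RI (fun t => snd (g t)) a b) <= M * (b - a)).
  { apply RI_bound; [apply cint1_snd; auto|]; intros.
    eapply Rle_trans; [apply Cnorm_snd | auto]. }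
  lra.
Qed.

Lemma CI_max (g : R -> Cpx) (a b : R) : cint1 g a b ->
  exists M, forall t, a <= t <= b -> Cnorm (g t) <= M.
Proof.
  intros [Hab Hg].
  destruct (continuity_ab_maj (fun s => Cnorm (g s)) a b Hab) as [m [Hm _]].
  - intros; apply ccont1_norm; auto.
  - exists (Cnorm (g m)); auto.
Qed.

(** * Integrals around axis-parallel rectangles

   [cint phi x0 x1 y0 y1] is the integral of [phi] along the positively
   oriented boundary of [x0, x1] x [y0, y1]: bottom and right edges forward,
   top and left edges backward. *)

Definition Ci : Cpx := (0, 1).

Definition cint (phi : Cpx -> Cpx) (x0 x1 y0 y1 : R) : Cpx :=
  Cadd (Csub (CI (fun t => phi (t, y0)) x0 x1) (CI (fun t => phi (t, y1)) x0 x1))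
       (Cmul Ci (Csub (CI (fun t => phi (x1, t)) y0 y1) (CI (fun t => phi (x0, t)) y0 y1))).

Definition on_boundary (x0 x1 y0 y1 x y : R) : Prop :=
  (x0 <= x <= x1 /\ (y = y0 \/ y = y1)) \/ (y0 <= y <= y1 /\ (x = x0 \/ x = x1)).

Definition bcont (phi : Cpx -> Cpx) (x0 x1 y0 y1 : R) : Prop :=
  x0 <= x1 /\ y0 <= y1 /\ forall x y, on_boundary x0 x1 y0 y1 x y -> ccont phi (x, y).

Definition rcont (phi : Cpx -> Cpx) (x0 x1 y0 y1 : R) : Prop :=
  x0 <= x1 /\ y0 <= y1 /\ forall x y, x0 <= x <= x1 -> y0 <= y <= y1 -> ccont phi (x, y).

Lemma on_boundary_in (x0 x1 y0 y1 x y : R) : x0 <= x1 -> y0 <= y1 ->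
  on_boundary x0 x1 y0 y1 x y -> x0 <= x <= x1 /\ y0 <= y <= y1.
Proof. intros Hx Hy [[? [-> | ->]] | [? [-> | ->]]]; lra. Qed.

Lemma rcont_bcont (phi : Cpx -> Cpx) (x0 x1 y0 y1 : R) :
  rcont phi x0 x1 y0 y1 -> bcont phi x0 x1 y0 y1.
Proof.
  intros [Hx [Hy H]]; repeat split; auto; intros x y Hb.
  destruct (on_boundary_in _ _ _ _ _ _ Hx Hy Hb); auto.
Qed.

Lemma rcont_sub (f : Cpx -> Cpx) (x0 x1 y0 y1 a0 a1 b0 b1 : R) : rcont f x0 x1 y0 y1 ->
  x0 <= a0 -> a0 <= a1 -> a1 <= x1 -> y0 <= b0 -> b0 <= b1 -> b1 <= y1 -> rcont f a0 a1 b0 b1.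
Proof. intros [_ [_ H]]; repeat split; auto; intros; apply H; lra. Qed.

Lemma bcont_add (f g : Cpx -> Cpx) (x0 x1 y0 y1 : R) : bcont f x0 x1 y0 y1 -> bcont g x0 x1 y0 y1 ->
  bcont (fun w => Cadd (f w) (g w)) x0 x1 y0 y1.
Proof. intros [Hx [Hy Hf]] [_ [_ Hg]]; repeat split; auto; intros; apply ccont_add; auto. Qed.

Lemma bcont_scal (c : Cpx) (f : Cpx -> Cpx) (x0 x1 y0 y1 : R) : bcont f x0 x1 y0 y1 ->
  bcont (fun w => Cmul c (f w)) x0 x1 y0 y1.
Proof.
  intros [Hx [Hy Hf]]; repeat split; auto; intros; apply ccont_mul; auto using ccont_const.
Qed.

Lemma bcont_sub (f g : Cpx -> Cpx) (x0 x1 y0 y1 : R) : bcont f x0 x1 y0 y1 -> bcont g x0 x1 y0 y1 ->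
  bcont (fun w => Csub (f w) (g w)) x0 x1 y0 y1.
Proof. intros [Hx [Hy Hf]] [_ [_ Hg]]; repeat split; auto; intros; apply ccont_sub; auto. Qed.

Lemma ccont_hline (phi : Cpx -> Cpx) (t y : R) : ccont phi (t, y) -> ccont1 (fun s => phi (s, y)) t.
Proof.
  intros H e He; destruct (H e He) as [d [Hd Hs]]; exists d; split; auto; intros s Hst.
  apply Hs; replace (Csub (s, y) (t, y)) with (s - t, 0) by (apply Cpx_eq; simpl; ring).
  rewrite Cnorm_real; auto.
Qed.

Lemma ccont_vline (phi : Cpx -> Cpx) (t x : R) : ccont phi (x, t) -> ccont1 (fun s => phi (x, s)) t.
Proof.
  intros H e He; destruct (H e He) as [d [Hd Hs]]; exists d; split; auto; intros s Hst.
  apply Hs; replace (Csub (x, s) (x, t)) with (0, s - t) by (apply Cpx_eq; simpl; ring).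
  rewrite Cnorm_imag; auto.
Qed.

Section Edges.
Variables (phi : Cpx -> Cpx) (x0 x1 y0 y1 : R).
Hypothesis Hphi : bcont phi x0 x1 y0 y1.

Lemma edge_bot : cint1 (fun t => phi (t, y0)) x0 x1.
Proof.
  destruct Hphi as [Hx [Hy H]]; split; auto; intros; apply ccont_hline, H; left; auto.
Qed.

Lemma edge_top : cint1 (fun t => phi (t, y1)) x0 x1.
Proof.
  destruct Hphi as [Hx [Hy H]]; split; auto; intros; apply ccont_hline, H; left; auto.
Qed.

Lemma edge_left : cint1 (fun t => phi (x0, t)) y0 y1.
Proof.
  destruct Hphi as [Hx [Hy H]]; split; auto; intros; apply ccont_vline, H; right; auto.
Qed.

Lemma edge_right : cint1 (fun t => phi (x1, t)) y0 y1.
Proof.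
  destruct Hphi as [Hx [Hy H]]; split; auto; intros; apply ccont_vline, H; right; auto.
Qed.
End Edges.

Ltac solve_edge := match goal with
  | H : bcont _ _ _ _ _ |- cint1 _ _ _ =>
      first [ exact (edge_bot _ _ _ _ _ H) | exact (edge_top _ _ _ _ _ H)
            | exact (edge_left _ _ _ _ _ H) | exact (edge_right _ _ _ _ _ H) ]
  end.

Lemma cint_add (f g : Cpx -> Cpx) (x0 x1 y0 y1 : R) : bcont f x0 x1 y0 y1 -> bcont g x0 x1 y0 y1 ->
  cint (fun w => Cadd (f w) (g w)) x0 x1 y0 y1 = Cadd (cint f x0 x1 y0 y1) (cint g x0 x1 y0 y1).
Proof.
  intros Hf Hg; unfold cint.
  rewrite (CI_add (fun t => f (t, y0))), (CI_add (fun t => f (t, y1))),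
    (CI_add (fun t => f (x1, t))), (CI_add (fun t => f (x0, t))); first [ring | solve_edge].
Qed.

Lemma cint_scal (c : Cpx) (f : Cpx -> Cpx) (x0 x1 y0 y1 : R) : bcont f x0 x1 y0 y1 ->
  cint (fun w => Cmul c (f w)) x0 x1 y0 y1 = Cmul c (cint f x0 x1 y0 y1).
Proof.
  intro Hf; unfold cint.
  rewrite (CI_scal c (fun t => f (t, y0))), (CI_scal c (fun t => f (t, y1))),
    (CI_scal c (fun t => f (x1, t))), (CI_scal c (fun t => f (x0, t))); first [ring | solve_edge].
Qed.

Lemma cint_sub (f g : Cpx -> Cpx) (x0 x1 y0 y1 : R) : bcont f x0 x1 y0 y1 -> bcont g x0 x1 y0 y1 ->
  cint (fun w => Csub (f w) (g w)) x0 x1 y0 y1 = Csub (cint f x0 x1 y0 y1) (cint g x0 x1 y0 y1).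
Proof.
  intros Hf Hg.
  replace (fun w => Csub (f w) (g w)) with (fun w => Cadd (f w) (Cmul (Copp C1) (g w)))
    by (apply functional_extensionality; intros; ring).
  rewrite cint_add, cint_scal by auto using bcont_scal; ring.
Qed.

Lemma cint_ext (f g : Cpx -> Cpx) (x0 x1 y0 y1 : R) : bcont f x0 x1 y0 y1 -> bcont g x0 x1 y0 y1 ->
  (forall x y, on_boundary x0 x1 y0 y1 x y -> f (x, y) = g (x, y)) ->
  cint f x0 x1 y0 y1 = cint g x0 x1 y0 y1.
Proof.
  intros Hf Hg Heq; unfold cint.
  rewrite (CI_ext (fun t => f (t, y0)) (fun t => g (t, y0))),
    (CI_ext (fun t => f (t, y1)) (fun t => g (t, y1))),
    (CI_ext (fun t => f (x1, t)) (fun t => g (x1, t))),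
    (CI_ext (fun t => f (x0, t)) (fun t => g (x0, t)));
    first [ reflexivity | solve_edge | intros; apply Heq; unfold on_boundary; auto ].
Qed.

Lemma Cnorm_Ci (z : Cpx) : Cnorm (Cmul Ci z) = Cnorm z.
Proof. rewrite Cnorm_mul; unfold Ci; rewrite Cnorm_imag, Rabs_R1; ring. Qed.

Lemma cint_bound (f : Cpx -> Cpx) (x0 x1 y0 y1 M : R) : bcont f x0 x1 y0 y1 ->
  (forall x y, on_boundary x0 x1 y0 y1 x y -> Cnorm (f (x, y)) <= M) ->
  Cnorm (cint f x0 x1 y0 y1) <= 4 * M * ((x1 - x0) + (y1 - y0)).
Proof.
  intros Hf HM; unfold cint.
  assert (Hh : forall y, y = y0 \/ y = y1 -> Cnorm (CI (fun t => f (t, y)) x0 x1) <= 2 * M * (x1 - x0)).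
  { intros y Hy; apply CI_bound; [destruct Hy as [-> | ->]; solve_edge|].
    intros; apply HM; left; auto. }
  assert (Hv : forall x, x = x0 \/ x = x1 -> Cnorm (CI (fun t => f (x, t)) y0 y1) <= 2 * M * (y1 - y0)).
  { intros x Hx; apply CI_bound; [destruct Hx as [-> | ->]; solve_edge|].
    intros; apply HM; right; auto. }
  eapply Rle_trans; [apply Cnorm_tri|]; rewrite Cnorm_Ci.
  pose proof (Cnorm_sub_le (CI (fun t => f (t, y0)) x0 x1) (CI (fun t => f (t, y1)) x0 x1)).
  pose proof (Cnorm_sub_le (CI (fun t => f (x1, t)) y0 y1) (CI (fun t => f (x0, t)) y0 y1)).
  specialize (Hh y0 (or_introl eq_refl)) as Hh0; specialize (Hh y1 (or_intror eq_refl)).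
  specialize (Hv x0 (or_introl eq_refl)) as Hv0; specialize (Hv x1 (or_intror eq_refl)).
  lra.
Qed.

Lemma bcont_max (f : Cpx -> Cpx) (x0 x1 y0 y1 : R) : bcont f x0 x1 y0 y1 ->
  exists M, forall x y, on_boundary x0 x1 y0 y1 x y -> Cnorm (f (x, y)) <= M.
Proof.
  intro Hf.
  destruct (CI_max _ _ _ (edge_bot _ _ _ _ _ Hf)) as [M1 H1].
  destruct (CI_max _ _ _ (edge_top _ _ _ _ _ Hf)) as [M2 H2].
  destruct (CI_max _ _ _ (edge_left _ _ _ _ _ Hf)) as [M3 H3].
  destruct (CI_max _ _ _ (edge_right _ _ _ _ _ Hf)) as [M4 H4].
  exists (Rmax (Rmax M1 M2) (Rmax M3 M4)); intros x y [[Hx [-> | ->]] | [Hy [-> | ->]]].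
  - eapply Rle_trans; [apply H1; auto | eapply Rle_trans; apply Rmax_l].
  - eapply Rle_trans; [apply H2; auto | eapply Rle_trans; [apply Rmax_r | apply Rmax_l]].
  - eapply Rle_trans; [apply H3; auto | eapply Rle_trans; [apply Rmax_l | apply Rmax_r]].
  - eapply Rle_trans; [apply H4; auto | eapply Rle_trans; apply Rmax_r].
Qed.

Lemma cint_vsplit (f : Cpx -> Cpx) (x0 c x1 y0 y1 : R) : x0 <= c <= x1 -> rcont f x0 x1 y0 y1 ->
  cint f x0 x1 y0 y1 = Cadd (cint f x0 c y0 y1) (cint f c x1 y0 y1).
Proof.
  intros Hc Hr; pose proof (rcont_bcont _ _ _ _ _ Hr) as Hb; unfold cint.
  rewrite <- (CI_chasles (fun t => f (t, y0)) x0 c x1), <- (CI_chasles (fun t => f (t, y1)) x0 c x1);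
    try lra; try solve_edge; ring.
Qed.

Lemma cint_hsplit (f : Cpx -> Cpx) (x0 x1 y0 c y1 : R) : y0 <= c <= y1 -> rcont f x0 x1 y0 y1 ->
  cint f x0 x1 y0 y1 = Cadd (cint f x0 x1 y0 c) (cint f x0 x1 c y1).
Proof.
  intros Hc Hr; pose proof (rcont_bcont _ _ _ _ _ Hr) as Hb; unfold cint.
  rewrite <- (CI_chasles (fun t => f (x0, t)) y0 c y1), <- (CI_chasles (fun t => f (x1, t)) y0 c y1);
    try lra; try solve_edge; ring.
Qed.

(* Affine functions have zero boundary integral (they have a primitive). *)
Lemma cint_affine (al be : Cpx) (x0 x1 y0 y1 : R) : x0 <= x1 -> y0 <= y1 ->
  cint (fun w => Cadd al (Cmul be w)) x0 x1 y0 y1 = C0.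
Proof.
  intros Hx Hy.
  assert (Hb : bcont (fun w => Cadd al (Cmul be w)) x0 x1 y0 y1).
  { repeat split; auto; intros.
    apply ccont_add; [apply ccont_const | apply ccont_mul; [apply ccont_const | apply ccont_id]]. }
  unfold cint.
  replace (fun t => Cadd al (Cmul be (t, y0)))
    with (fun t => Cadd (Cadd al (Cmul be (t, y1))) (Cmul be (0, y0 - y1)))
    by (apply functional_extensionality; intros; destruct be; apply Cpx_eq; simpl; ring).
  replace (fun t => Cadd al (Cmul be (x1, t)))
    with (fun t => Cadd (Cadd al (Cmul be (x0, t))) (Cmul be (x1 - x0, 0)))
    by (apply functional_extensionality; intros; destruct be; apply Cpx_eq; simpl; ring).
  rewrite (CI_add (fun t => Cadd al (Cmul be (t, y1)))), (CI_add (fun t => Cadd al (Cmul be (x0, t))));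
    try solve_edge; try (apply cint1_const; auto).
  rewrite !CI_const; destruct be; unfold Ci, Cadd, Csub, Cmul, Copp, C0; simpl; apply Cpx_eq; ring.
Qed.

(** * The Goursat lemma *)

(* Near a point p of differentiability, phi differs from its affine approximation by at most
   |slope - l| |w - p|; since affine functions integrate to zero, the boundary integral over a
   rectangle of size [S] all of whose points are within [S] of p is at most [4 ep S S]. *)
Lemma cint_near_linear (phi : Cpx -> Cpx) (p l : Cpx) (a0 a1 b0 b1 ep : R) :
  rcont phi a0 a1 b0 b1 ->
  (forall x y, a0 <= x <= a1 -> b0 <= y <= b1 ->
     Cnorm (Csub (slope phi p l (x, y)) l) <= ep /\
     Cnorm (Csub (x, y) p) <= (a1 - a0) + (b1 - b0)) ->
  Cnorm (cint phi a0 a1 b0 b1) <= 4 * (ep * ((a1 - a0) + (b1 - b0))) * ((a1 - a0) + (b1 - b0)).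
Proof.
  intros Hr Hpt; pose proof Hr as [Ha [Hb _]].
  set (aff := fun w => Cadd (Csub (phi p) (Cmul l p)) (Cmul l w)).
  assert (Haff : bcont aff a0 a1 b0 b1).
  { repeat split; auto; intros; unfold aff.
    apply ccont_add; [apply ccont_const | apply ccont_mul; [apply ccont_const | apply ccont_id]]. }
  assert (E : cint phi a0 a1 b0 b1 = cint (fun w => Csub (phi w) (aff w)) a0 a1 b0 b1).
  { rewrite cint_sub by auto using rcont_bcont; unfold aff; rewrite cint_affine by lra; ring. }
  rewrite E; apply cint_bound; [apply bcont_sub; auto using rcont_bcont|].
  intros x y Hbd; destruct (on_boundary_in _ _ _ _ _ _ Ha Hb Hbd) as [Hx Hy].
  destruct (Hpt x y Hx Hy) as [Hs Hd].
  replace (Csub (phi (x, y)) (aff (x, y)))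
    with (Cmul (Csub (slope phi p l (x, y)) l) (Csub (x, y) p))
    by (unfold aff; rewrite (slope_id phi p l (x, y)); ring).
  rewrite Cnorm_mul; apply Rmult_le_compat; auto using Cnorm_ge0.
Qed.

Lemma nested_intervals (lo hi : nat -> R) : (forall n, lo n <= lo (S n)) ->
  (forall n k, (n <= k)%nat -> hi k <= hi n) -> (forall n, lo n <= hi n) ->
  exists p, forall n, lo n <= p <= hi n.
Proof.
  intros Hlo Hhi Hw.
  assert (Hub : has_ub lo).
  { exists (hi O); intros x [i ->]; pose proof (Hhi O i (Nat.le_0_l i)); pose proof (Hw i); lra. }
  destruct (growing_cv lo Hlo Hub) as [p Hp]; exists p; intro n; split.
  - apply growing_ineq; auto.
  - destruct (Rle_dec p (hi n)) as [Hle | Hgt]; auto; exfalso.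
    destruct (Hp (p - hi n)) as [N HN]; [lra|].
    specialize (HN (max N n) (Nat.le_max_l N n)); unfold Rdist in HN; apply Rabs_def2 in HN.
    pose proof (Hhi n (max N n) (Nat.le_max_r N n)); pose proof (Hw (max N n)); lra.
Qed.

Record rect := Rect { rx0 : R; rx1 : R; ry0 : R; ry1 : R }.

Section Goursat.
Variable phi : Cpx -> Cpx.

Definition eta (Q : rect) : Cpx := cint phi (rx0 Q) (rx1 Q) (ry0 Q) (ry1 Q).

Definition mx (Q : rect) : R := (rx0 Q + rx1 Q) / 2.
Definition my (Q : rect) : R := (ry0 Q + ry1 Q) / 2.

Definition q1 (Q : rect) : rect := Rect (rx0 Q) (mx Q) (ry0 Q) (my Q).
Definition q2 (Q : rect) : rect := Rect (mx Q) (rx1 Q) (ry0 Q) (my Q).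
Definition q3 (Q : rect) : rect := Rect (rx0 Q) (mx Q) (my Q) (ry1 Q).
Definition q4 (Q : rect) : rect := Rect (mx Q) (rx1 Q) (my Q) (ry1 Q).

Lemma eta_split (Q : rect) : rcont phi (rx0 Q) (rx1 Q) (ry0 Q) (ry1 Q) ->
  eta Q = Cadd (Cadd (eta (q1 Q)) (eta (q2 Q))) (Cadd (eta (q3 Q)) (eta (q4 Q))).
Proof.
  destruct Q as [a0 a1 b0 b1]; unfold eta, q1, q2, q3, q4, mx, my; simpl; intro Hr.
  pose proof Hr as [Ha [Hb _]].
  rewrite (cint_vsplit phi a0 ((a0 + a1) / 2) a1 b0 b1) by (auto; lra).
  rewrite (cint_hsplit phi a0 ((a0 + a1) / 2) b0 ((b0 + b1) / 2) b1)
    by (try lra; eapply rcont_sub; eauto; lra).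
  rewrite (cint_hsplit phi ((a0 + a1) / 2) a1 b0 ((b0 + b1) / 2) b1)
    by (try lra; eapply rcont_sub; eauto; lra).
  ring.
Qed.

Definition quad (Q : rect) : rect :=
  if Rle_dec (Cnorm (eta Q) / 4) (Cnorm (eta (q1 Q))) then q1 Q else
  if Rle_dec (Cnorm (eta Q) / 4) (Cnorm (eta (q2 Q))) then q2 Q else
  if Rle_dec (Cnorm (eta Q) / 4) (Cnorm (eta (q3 Q))) then q3 Q else q4 Q.

Lemma quad_prop (Q : rect) : rx0 Q <= rx1 Q -> ry0 Q <= ry1 Q ->
  rcont phi (rx0 Q) (rx1 Q) (ry0 Q) (ry1 Q) ->
  Cnorm (eta Q) / 4 <= Cnorm (eta (quad Q)) /\
  rx0 Q <= rx0 (quad Q) /\ rx1 (quad Q) <= rx1 Q /\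
  rx1 (quad Q) - rx0 (quad Q) = (rx1 Q - rx0 Q) / 2 /\
  ry0 Q <= ry0 (quad Q) /\ ry1 (quad Q) <= ry1 Q /\
  ry1 (quad Q) - ry0 (quad Q) = (ry1 Q - ry0 Q) / 2.
Proof.
  intros Hx Hy Hr; pose proof (eta_split Q Hr) as E.
  assert (Hsum : Cnorm (eta Q) <= Cnorm (eta (q1 Q)) + Cnorm (eta (q2 Q))
                                  + Cnorm (eta (q3 Q)) + Cnorm (eta (q4 Q))).
  { rewrite E; eapply Rle_trans; [apply Cnorm_tri|].
    pose proof (Cnorm_tri (eta (q1 Q)) (eta (q2 Q))).
    pose proof (Cnorm_tri (eta (q3 Q)) (eta (q4 Q))); lra. }
  unfold quad; repeat destruct (Rle_dec _ _);
    unfold q1, q2, q3, q4, mx, my in *; simpl in *; repeat split; lra.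
Qed.

Variables x0 x1 y0 y1 : R.
Hypothesis Hx : x0 < x1.
Hypothesis Hy : y0 < y1.
Hypothesis Hd : forall x y, x0 <= x <= x1 -> y0 <= y <= y1 -> cdiff phi (x, y).

Lemma goursat_rcont : rcont phi x0 x1 y0 y1.
Proof. repeat split; try lra; intros; apply cdiff_cont, Hd; auto. Qed.

Fixpoint Qn (n : nat) : rect := match n with O => Rect x0 x1 y0 y1 | S k => quad (Qn k) end.

Lemma Qn_inv (n : nat) :
  x0 <= rx0 (Qn n) /\ rx1 (Qn n) <= x1 /\ rx1 (Qn n) - rx0 (Qn n) = (x1 - x0) * (/ 2) ^ n /\
  y0 <= ry0 (Qn n) /\ ry1 (Qn n) <= y1 /\ ry1 (Qn n) - ry0 (Qn n) = (y1 - y0) * (/ 2) ^ n /\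
  Cnorm (cint phi x0 x1 y0 y1) * (/ 4) ^ n <= Cnorm (eta (Qn n)).
Proof.
  induction n as [|n IH]; simpl.
  { unfold eta; simpl; repeat split; lra. }
  destruct IH as [A [B [C [D [E [F G]]]]]].
  assert (0 < (/ 2) ^ n) by (apply pow_lt; lra).
  destruct (quad_prop (Qn n)) as [P1 [P2 [P3 [P4 [P5 [P6 P7]]]]]];
    [nra | nra | eapply rcont_sub; [apply goursat_rcont | ..]; nra |].
  repeat split; lra.
Qed.

Lemma Qn_wf (n : nat) : rx0 (Qn n) <= rx1 (Qn n) /\ ry0 (Qn n) <= ry1 (Qn n).
Proof.
  destruct (Qn_inv n) as [_ [_ [C [_ [_ [F _]]]]]].
  assert (0 < (/ 2) ^ n) by (apply pow_lt; lra); split; nra.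
Qed.

Lemma Qn_step (n : nat) : rx0 (Qn n) <= rx0 (Qn (S n)) /\ rx1 (Qn (S n)) <= rx1 (Qn n) /\
  ry0 (Qn n) <= ry0 (Qn (S n)) /\ ry1 (Qn (S n)) <= ry1 (Qn n).
Proof.
  destruct (Qn_inv n) as [A [B [_ [D [E _]]]]]; destruct (Qn_wf n).
  destruct (quad_prop (Qn n)) as [_ [P2 [P3 [_ [P5 [P6 _]]]]]]; auto.
  eapply rcont_sub; [apply goursat_rcont | ..]; lra.
Qed.

Lemma Qn_mono (n k : nat) : (n <= k)%nat -> rx0 (Qn n) <= rx0 (Qn k) /\ rx1 (Qn k) <= rx1 (Qn n) /\
  ry0 (Qn n) <= ry0 (Qn k) /\ ry1 (Qn k) <= ry1 (Qn n).
Proof. induction 1 as [|m _ IH]; [repeat split; lra | destruct (Qn_step m); lra]. Qed.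

(* If it were c > 0, the nested quadrants would shrink to a point p with
   c / 4^n <= |eta (Qn n)|, while differentiability at p bounds |eta (Qn n)| by
   4 ep (K / 2^n)^2 with K the size of the rectangle; ep = c / (8 K^2) gives a contradiction. *)
Theorem goursat : cint phi x0 x1 y0 y1 = C0.
Proof.
  destruct (Ceq_dec (cint phi x0 x1 y0 y1) C0) as [E | Hne]; auto; exfalso.
  set (c := Cnorm (cint phi x0 x1 y0 y1)); assert (Hc : 0 < c) by (apply Cnorm_pos; auto).
  destruct (nested_intervals (fun n => rx0 (Qn n)) (fun n => rx1 (Qn n))) as [px Hpx];
    [intros; apply Qn_step | intros; apply Qn_mono; auto | intros; apply Qn_wf |].
  destruct (nested_intervals (fun n => ry0 (Qn n)) (fun n => ry1 (Qn n))) as [py Hpy];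
    [intros; apply Qn_step | intros; apply Qn_mono; auto | intros; apply Qn_wf |].
  simpl in Hpx, Hpy.
  destruct (Hd px py) as [l Hl]; [specialize (Hpx O); simpl in Hpx; lra
                                 | specialize (Hpy O); simpl in Hpy; lra |].
  set (K := (x1 - x0) + (y1 - y0)); assert (HK : 0 < K) by (unfold K; lra).
  set (ep := c / (8 * K * K)); assert (Hep : 0 < ep) by (apply Rdiv_lt_0_compat; nra).
  destruct (Hl ep Hep) as [d [Hdp Hsl]]; rewrite slope_at in Hsl.
  destruct (pow_lt_1_zero (/ 2) ltac:(rewrite Rabs_right; lra) (d / K)
              ltac:(apply Rdiv_lt_0_compat; lra)) as [N HN].
  specialize (HN N (le_n N)); rewrite Rabs_right in HN by (left; apply pow_lt; lra).
  set (h := (/ 2) ^ N) in *; assert (Hh : 0 < h) by (apply pow_lt; lra).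
  destruct (Qn_inv N) as [A [B [C [D [E [F G]]]]]]; fold h c in C, F, G.
  specialize (Hpx N); specialize (Hpy N); set (Q := Qn N) in *.
  assert (Hsize : (rx1 Q - rx0 Q) + (ry1 Q - ry0 Q) = K * h) by (unfold K; lra).
  assert (Hdk : K * h < d).
  { replace d with (K * (d / K)) by (field; lra); apply Rmult_lt_compat_l; auto. }
  assert (Hbound := cint_near_linear phi (px, py) l (rx0 Q) (rx1 Q) (ry0 Q) (ry1 Q) ep).
  rewrite Hsize in Hbound; fold (eta Q) in Hbound.
  assert (Hupper : Cnorm (eta Q) <= 4 * (ep * (K * h)) * (K * h)).
  { apply Hbound; [eapply rcont_sub; [apply goursat_rcont | ..]; lra|].
    intros x y Hx' Hy'.
    assert (Hw : Cnorm (Csub (x, y) (px, py)) <= K * h).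
    { rewrite <- Hsize; apply Cnorm_box; apply Rabs_le; lra. }
    split; [left; apply Hsl; lra | exact Hw]. }
  assert (Hq : (/ 4) ^ N = h * h) by (unfold h; rewrite <- Rpow_mult_distr; f_equal; field).
  assert (Hfin : 4 * (ep * (K * h)) * (K * h) = c / 2 * (h * h)) by (unfold ep; field; lra).
  rewrite Hq in G; rewrite Hfin in Hupper.
  assert (Hhh : 0 < h * h) by nra; clearbody c h; nra.
Qed.
End Goursat.

(* If all subrectangles avoiding z have zero integral, the integral over a rectangle
   containing z equals the integral over any small square centred at z: cut off the
   four slabs left, right, below and above the square. *)
Lemma cint_to_square (phi : Cpx -> Cpx) (zx zy x0 x1 y0 y1 d : R) :
  x0 < zx - d -> zx + d < x1 -> y0 < zy - d -> zy + d < y1 -> 0 < d ->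
  rcont phi x0 x1 y0 y1 ->
  (forall a0 a1 b0 b1, x0 <= a0 -> a0 < a1 -> a1 <= x1 -> y0 <= b0 -> b0 < b1 -> b1 <= y1 ->
     (a1 < zx \/ zx < a0 \/ b1 < zy \/ zy < b0) -> cint phi a0 a1 b0 b1 = C0) ->
  cint phi x0 x1 y0 y1 = cint phi (zx - d) (zx + d) (zy - d) (zy + d).
Proof.
  intros H1 H2 H3 H4 Hd Hr Hzero.
  rewrite (cint_vsplit phi x0 (zx - d) x1 y0 y1) by (auto; lra).
  rewrite (Hzero x0 (zx - d) y0 y1) by lra.
  rewrite (cint_vsplit phi (zx - d) (zx + d) x1 y0 y1) by (first [lra | eapply rcont_sub; [exact Hr | ..]; lra]).
  rewrite (Hzero (zx + d) x1 y0 y1) by lra.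
  rewrite (cint_hsplit phi (zx - d) (zx + d) y0 (zy - d) y1)
    by (first [lra | eapply rcont_sub; [exact Hr | ..]; lra]).
  rewrite (Hzero (zx - d) (zx + d) y0 (zy - d)) by lra.
  rewrite (cint_hsplit phi (zx - d) (zx + d) (zy - d) (zy + d) y1)
    by (first [lra | eapply rcont_sub; [exact Hr | ..]; lra]).
  rewrite (Hzero (zx - d) (zx + d) (zy + d) y1) by lra.
  ring.
Qed.

(* Goursat still holds if differentiability fails at one interior point where phi is merely
   continuous: the integral equals that over arbitrarily small squares around the point,
   and those are O(size) since phi is bounded there. *)
Theorem goursat_exc (phi : Cpx -> Cpx) (zx zy x0 x1 y0 y1 : R) :
  x0 < zx < x1 -> y0 < zy < y1 -> ccont phi (zx, zy) ->
  (forall x y, x0 <= x <= x1 -> y0 <= y <= y1 -> (x, y) <> (zx, zy) -> cdiff phi (x, y)) ->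
  cint phi x0 x1 y0 y1 = C0.
Proof.
  intros Hzx Hzy Hcz Hd.
  assert (Hr : rcont phi x0 x1 y0 y1).
  { repeat split; try lra; intros x y Hx Hy.
    destruct (Ceq_dec (x, y) (zx, zy)) as [E | Ne]; [rewrite E; auto|].
    apply cdiff_cont, Hd; auto. }
  destruct (Ceq_dec (cint phi x0 x1 y0 y1) C0) as [E | Hne]; auto; exfalso.
  set (c := Cnorm (cint phi x0 x1 y0 y1)); assert (Hc : 0 < c) by (apply Cnorm_pos; auto).
  set (M := Cnorm (phi (zx, zy)) + 1).
  assert (HM : 0 < M) by (unfold M; pose proof (Cnorm_ge0 (phi (zx, zy))); lra).
  destruct (Hcz 1 ltac:(lra)) as [d0 [Hd0 Hball]].
  set (d := Rmin (Rmin (Rmin (d0 / 4) ((zx - x0) / 2)) (Rmin ((x1 - zx) / 2) ((zy - y0) / 2)))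
                 (Rmin ((y1 - zy) / 2) (c / (64 * M)))).
  assert (Hdpos : 0 < d) by (unfold d; repeat apply Rmin_pos; try lra; apply Rdiv_lt_0_compat; nra).
  assert (Hdle : d <= d0 / 4 /\ d <= (zx - x0) / 2 /\ d <= (x1 - zx) / 2 /\
                 d <= (zy - y0) / 2 /\ d <= (y1 - zy) / 2 /\ d <= c / (64 * M)).
  { unfold d; repeat split; solve_rmin. }
  destruct Hdle as [D1 [D2 [D3 [D4 [D5 D6]]]]].
  assert (E : cint phi x0 x1 y0 y1 = cint phi (zx - d) (zx + d) (zy - d) (zy + d)).
  { apply cint_to_square; try lra; auto.
    intros a0 a1 b0 b1 Ha0 Ha Ha1 Hb0 Hb Hb1 Havoid; apply goursat; auto; intros x y Hx Hy.
    apply Hd; try lra; intro Exy; injection Exy; intros -> ->.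
    destruct Havoid as [? | [? | [? | ?]]]; lra. }
  assert (Hsq : Cnorm (cint phi (zx - d) (zx + d) (zy - d) (zy + d)) <= 4 * M * (2 * d + 2 * d)).
  { replace (2 * d + 2 * d) with ((zx + d - (zx - d)) + (zy + d - (zy - d))) by ring.
    apply cint_bound; [apply rcont_bcont; eapply rcont_sub; [exact Hr | ..]; lra|].
    intros x y Hb; destruct (on_boundary_in (zx - d) (zx + d) (zy - d) (zy + d) x y)
      as [Hx Hy]; try lra; auto.
    assert (Hxy : Cnorm (Csub (x, y) (zx, zy)) < d0).
    { eapply Rle_lt_trans; [apply (Cnorm_box x y zx zy d d); apply Rabs_le | ]; lra. }
    specialize (Hball _ Hxy).
    pose proof (Cnorm_tri (Csub (phi (x, y)) (phi (zx, zy))) (phi (zx, zy))) as Ht.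
    replace (Cadd (Csub (phi (x, y)) (phi (zx, zy))) (phi (zx, zy))) with (phi (x, y)) in Ht by ring.
    unfold M; lra. }
  assert (16 * M * d <= c / 4).
  { apply Rle_trans with (16 * M * (c / (64 * M))); [apply Rmult_le_compat_l; lra | right; field; lra]. }
  fold c in E; rewrite <- E in Hsq; fold c in Hsq; lra.
Qed.

Lemma slope_cdiff (F : Cpx -> Cpx) (z l w : Cpx) : w <> z -> cdiff F w -> cdiff (slope F z l) w.
Proof.
  intros Hne HF.
  apply cdiff_local with (g := fun u => Cmul (Csub (F u) (F z)) (Cinv (Csub u z)))
                         (r := Cnorm (Csub w z)); [apply Cnorm_pos, sub_neq0; auto | | ].
  - intros u Hu; rewrite slope_ne; [reflexivity|].
    intro E; rewrite E, Cnorm_sub_sym in Hu; lra.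
  - apply cdiff_quotient; auto.
Qed.

(* Apply the exceptional Goursat lemma to the difference quotient of F at z. *)
Theorem cauchy (F : Cpx -> Cpx) (x0 x1 y0 y1 zx zy : R) :
  x0 < zx < x1 -> y0 < zy < y1 ->
  (forall x y, x0 <= x <= x1 -> y0 <= y <= y1 -> cdiff F (x, y)) ->
  cint (fun w => Cmul (F w) (Cinv (Csub w (zx, zy)))) x0 x1 y0 y1 =
  Cmul (F (zx, zy)) (cint (fun w => Cinv (Csub w (zx, zy))) x0 x1 y0 y1).
Proof.
  intros Hzx Hzy Hd; set (z := (zx, zy)).
  destruct (Hd zx zy ltac:(lra) ltac:(lra)) as [l Hl]; fold z in Hl.
  set (s := slope F z l).
  assert (Hbd : forall x y, on_boundary x0 x1 y0 y1 x y ->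
                  x0 <= x <= x1 /\ y0 <= y <= y1 /\ (x, y) <> z).
  { intros x y Hb; destruct (on_boundary_in x0 x1 y0 y1 x y) as [Hx Hy]; try lra; auto.
    repeat split; try lra; unfold z; intro E; injection E; intros; subst.
    destruct Hb as [[? [? | ?]] | [? [? | ?]]]; lra. }
  assert (Hs0 : cint s x0 x1 y0 y1 = C0).
  { apply (goursat_exc s zx zy); auto; intros x y Hx Hy Hne; apply slope_cdiff; auto. }
  assert (HG : bcont (fun w => Cmul (F w) (Cinv (Csub w z))) x0 x1 y0 y1).
  { repeat split; try lra; intros x y Hb; destruct (Hbd x y Hb) as [? [? ?]].
    apply cdiff_cont, cdiff_mul; [apply Hd; auto | apply cdiff_kernel; auto]. }
  assert (HI : bcont (fun w => Cinv (Csub w z)) x0 x1 y0 y1).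
  { repeat split; try lra; intros x y Hb; destruct (Hbd x y Hb) as [? [? ?]].
    apply cdiff_cont, cdiff_kernel; auto. }
  assert (HS : bcont s x0 x1 y0 y1).
  { repeat split; try lra; intros x y Hb; destruct (Hbd x y Hb) as [? [? ?]].
    apply cdiff_cont, slope_cdiff; auto. }
  assert (E : Csub (cint (fun w => Cmul (F w) (Cinv (Csub w z))) x0 x1 y0 y1)
                   (Cmul (F z) (cint (fun w => Cinv (Csub w z)) x0 x1 y0 y1)) = cint s x0 x1 y0 y1).
  { rewrite <- cint_scal, <- cint_sub by auto using bcont_scal.
    apply cint_ext; auto using bcont_sub, bcont_scal; intros x y Hb.
    destruct (Hbd x y Hb) as [? [? ?]]; unfold s; rewrite slope_ne by auto; unfold Cdiv; ring. }
  apply Csub_eq0; rewrite E; exact Hs0.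
Qed.

(** * Second-order Taylor expansions *)

Definition quadratic (c0 c1 c2 h : Cpx) : Cpx := Cadd c0 (Cadd (Cmul c1 h) (Cmul c2 (Cmul h h))).

Definition taylor2 (u : Cpx -> Cpx) (a : Cpx) : Prop :=
  exists c1 c2 rho B, 0 < rho /\ forall z, Cnorm (Csub z a) < rho ->
    Cnorm (Csub (u z) (quadratic (u a) c1 c2 (Csub z a))) <= B * Cnorm (Csub z a) ^ 3.

Lemma taylor2_lipschitz (u : Cpx -> Cpx) (a : Cpx) : taylor2 u a ->
  exists rho K, 0 < rho /\ 0 <= K /\
    forall z, Cnorm (Csub z a) < rho -> Cnorm (Csub (u z) (u a)) <= K * Cnorm (Csub z a).
Proof.
  intros [c1 [c2 [rho [B [Hrho HB]]]]].
  exists (Rmin rho 1), (Cnorm c1 + Cnorm c2 + Rabs B); split; [apply Rmin_pos; lra|].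
  split; [pose proof (Cnorm_ge0 c1); pose proof (Cnorm_ge0 c2); pose proof (Rabs_pos B); lra|].
  intros z Hz; set (h := Csub z a) in *.
  assert (Hh1 : Cnorm h <= 1) by (left; eapply Rlt_le_trans; [apply Hz | apply Rmin_r]).
  specialize (HB z ltac:(eapply Rlt_le_trans; [apply Hz | apply Rmin_l])); fold h in HB.
  replace (Csub (u z) (u a))
    with (Cadd (Csub (u z) (quadratic (u a) c1 c2 h)) (Cadd (Cmul c1 h) (Cmul c2 (Cmul h h))))
    by (unfold quadratic; ring).
  eapply Rle_trans; [apply Cnorm_tri|]; eapply Rle_trans; [apply Rplus_le_compat_l, Cnorm_tri|].
  rewrite !Cnorm_mul; pose proof (Cnorm_ge0 h); pose proof (Cnorm_ge0 c1); pose proof (Cnorm_ge0 c2).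
  pose proof (Rle_abs B); pose proof (Rabs_pos B).
  assert (Hh3 : Cnorm h ^ 3 <= Cnorm h) by (simpl; nra).
  assert (Hh3' : 0 <= Cnorm h ^ 3) by (apply pow_le; auto).
  assert (B * Cnorm h ^ 3 <= Rabs B * Cnorm h) by nra.
  assert (Cnorm c2 * (Cnorm h * Cnorm h) <= Cnorm c2 * Cnorm h) by nra.
  nra.
Qed.

Lemma quadratic_quotient_defect (n0 n1 n2 d0 d1 d2 q0 q1 q2 h : Cpx) :
  n0 = Cmul q0 d0 -> n1 = Cadd (Cmul q0 d1) (Cmul q1 d0) ->
  n2 = Cadd (Cadd (Cmul q0 d2) (Cmul q1 d1)) (Cmul q2 d0) ->
  Csub (quadratic n0 n1 n2 h) (Cmul (quadratic q0 q1 q2 h) (quadratic d0 d1 d2 h)) =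
  Cmul (Cmul h (Cmul h h)) (Copp (Cadd (Cadd (Cmul d1 q2) (Cmul d2 q1)) (Cmul h (Cmul d2 q2)))).
Proof. intros -> -> ->; unfold quadratic; ring. Qed.

Lemma Cnorm_quadratic_le (c0 c1 c2 h : Cpx) : Cnorm h <= 1 ->
  Cnorm (quadratic c0 c1 c2 h) <= Cnorm c0 + Cnorm c1 + Cnorm c2.
Proof.
  intro Hh; unfold quadratic; eapply Rle_trans; [apply Cnorm_tri|].
  eapply Rle_trans; [apply Rplus_le_compat_l, Cnorm_tri|]; rewrite !Cnorm_mul.
  pose proof (Cnorm_ge0 h); pose proof (Cnorm_ge0 c1); pose proof (Cnorm_ge0 c2).
  assert (Cnorm h * Cnorm h <= 1) by nra.
  assert (Cnorm c1 * Cnorm h <= Cnorm c1) by nra.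
  assert (Cnorm c2 * (Cnorm h * Cnorm h) <= Cnorm c2) by nra.
  lra.
Qed.

Lemma taylor2_nonvanishing (D : Cpx -> Cpx) (a : Cpx) : taylor2 D a -> D a <> C0 ->
  exists rho, 0 < rho /\ forall z, Cnorm (Csub z a) < rho -> Cnorm (D a) / 2 <= Cnorm (D z).
Proof.
  intros HD HDa; destruct (taylor2_lipschitz D a HD) as [rL [KL [HrL [HKL HL]]]].
  pose proof (Cnorm_pos _ HDa) as Hd0.
  exists (Rmin rL (Cnorm (D a) / (2 * KL + 1))); split;
    [apply Rmin_pos; [lra | apply Rdiv_lt_0_compat; lra]|].
  intros z Hz; set (h := Csub z a) in *.
  specialize (HL z ltac:(eapply Rlt_le_trans; [apply Hz | apply Rmin_l])); fold h in HL.
  assert (HzK : Cnorm h < Cnorm (D a) / (2 * KL + 1)) by (eapply Rlt_le_trans; [apply Hz | apply Rmin_r]).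
  apply Rmult_lt_compat_l with (r := 2 * KL + 1) in HzK; [|lra].
  replace ((2 * KL + 1) * (Cnorm (D a) / (2 * KL + 1))) with (Cnorm (D a)) in HzK by (field; lra).
  pose proof (Cnorm_sub_tri (D a) (D z)) as Ht; rewrite Cnorm_sub_sym in Ht.
  pose proof (Cnorm_ge0 h); nra.
Qed.

Lemma Cnorm_defect_bound (u k p q e : Cpx) (BN BP BQ BD : R) :
  Cnorm u <= BN * Cnorm k -> Cnorm p <= BP -> Cnorm q <= BQ -> Cnorm e <= BD * Cnorm k ->
  Cnorm (Cadd (Cadd u (Cmul k p)) (Cmul (Copp q) e)) <= (BN + BP + BQ * BD) * Cnorm k.
Proof.
  intros Hu Hp Hq He; eapply Rle_trans; [apply Cnorm_tri|].
  eapply Rle_trans; [apply Rplus_le_compat_r, Cnorm_tri|]; rewrite !Cnorm_mul, Cnorm_opp.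
  pose proof (Cnorm_ge0 k); pose proof (Cnorm_ge0 q); pose proof (Cnorm_ge0 e).
  assert (Cnorm q * Cnorm e <= BQ * (BD * Cnorm k)) by (apply Rmult_le_compat; lra).
  assert (Cnorm k * Cnorm p <= BP * Cnorm k) by nra.
  lra.
Qed.

(* If N = F * D near a, where N and D have second-order expansions and D a <> 0, then so
   has F: with q the quadratic fitting N / D to order 2,
   (F - q) D = (N - PN) + (PN - q PD) - q (D - PD) = O(h^3), and D is bounded below. *)
Lemma taylor2_factor (F N D : Cpx -> Cpx) (a : Cpx) (r : R) : 0 < r ->
  (forall z, Cnorm (Csub z a) < r -> N z = Cmul (F z) (D z)) ->
  taylor2 N a -> taylor2 D a -> D a <> C0 -> taylor2 F a.
Proof.
  intros Hr HND [n1 [n2 [rN [BN [HrN HN]]]]] HDt HDa; pose proof HDt as [d1 [d2 [rD [BD [HrD HD]]]]].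
  destruct (taylor2_nonvanishing D a HDt HDa) as [rV [HrV HV]].
  pose proof (Cnorm_pos _ HDa) as Hd0.
  pose proof (HND a ltac:(replace (Csub a a) with C0 by ring; rewrite Cnorm_C0; auto)) as HNa.
  set (q0 := Cdiv (N a) (D a)); set (q1 := Cdiv (Csub n1 (Cmul q0 d1)) (D a)).
  set (q2 := Cdiv (Csub (Csub n2 (Cmul q0 d2)) (Cmul q1 d1)) (D a)).
  assert (Hq0 : F a = q0) by (unfold q0; rewrite HNa; field; auto).
  set (BQ := Cnorm q0 + Cnorm q1 + Cnorm q2).
  set (BP := Cnorm (Cadd (Cmul d1 q2) (Cmul d2 q1)) + Cnorm (Cmul d2 q2)).
  set (BK := BN + BP + BQ * BD).
  exists q1, q2, (Rmin (Rmin r rN) (Rmin rD (Rmin rV 1))), (2 * BK / Cnorm (D a)).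
  split; [repeat apply Rmin_pos; lra|].
  intros z Hz; set (h := Csub z a) in *.
  assert (Hzr : Cnorm h < r) by (eapply Rlt_le_trans; [apply Hz | solve_rmin]).
  assert (HzN : Cnorm h < rN) by (eapply Rlt_le_trans; [apply Hz | solve_rmin]).
  assert (HzD : Cnorm h < rD) by (eapply Rlt_le_trans; [apply Hz | solve_rmin]).
  assert (Hz1 : Cnorm h <= 1) by (left; eapply Rlt_le_trans; [apply Hz | solve_rmin]).
  specialize (HV z ltac:(eapply Rlt_le_trans; [apply Hz | solve_rmin])).
  assert (Hdef : Cmul (Csub (F z) (quadratic (F a) q1 q2 h)) (D z) =
    Cadd (Cadd (Csub (N z) (quadratic (N a) n1 n2 h))
               (Cmul (Cmul h (Cmul h h)) (Copp (Cadd (Cadd (Cmul d1 q2) (Cmul d2 q1)) (Cmul h (Cmul d2 q2))))))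
         (Cmul (Copp (quadratic q0 q1 q2 h)) (Csub (D z) (quadratic (D a) d1 d2 h)))).
  { rewrite <- (quadratic_quotient_defect (N a) n1 n2 (D a) d1 d2 q0 q1 q2 h)
      by (unfold q2, q1, q0; field; auto).
    rewrite HND by auto; rewrite Hq0; ring. }
  specialize (HN z HzN); specialize (HD z HzD); fold h in HN, HD.
  assert (Hh3 : Cnorm (Cmul h (Cmul h h)) = Cnorm h ^ 3) by (rewrite !Cnorm_mul; ring).
  assert (Hbound : Cnorm (Csub (F z) (quadratic (F a) q1 q2 h)) * Cnorm (D z) <= BK * Cnorm h ^ 3).
  { rewrite <- Cnorm_mul, Hdef, <- Hh3; unfold BK; apply Cnorm_defect_bound;
      [rewrite Hh3; exact HN | | apply Cnorm_quadratic_le; auto | rewrite Hh3; exact HD].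
    rewrite Cnorm_opp; eapply Rle_trans; [apply Cnorm_tri|]; rewrite (Cnorm_mul h).
    unfold BP; pose proof (Cnorm_ge0 h); pose proof (Cnorm_ge0 (Cmul d2 q2)); nra. }
  apply Rmult_le_reg_r with (Cnorm (D a) / 2); [lra|].
  replace (2 * BK / Cnorm (D a) * Cnorm h ^ 3 * (Cnorm (D a) / 2)) with (BK * Cnorm h ^ 3) by (field; lra).
  pose proof (Cnorm_ge0 (Csub (F z) (quadratic (F a) q1 q2 h))); nra.
Qed.

Lemma taylor2_slope (u : Cpx -> Cpx) (a : Cpx) : taylor2 u a ->
  exists c1 c2, cdif (slope u a c1) a c2.
Proof.
  intros [c1 [c2 [rho [B [Hrho HB]]]]]; exists c1, c2; intros e He.
  exists (Rmin rho (e / (Rabs B + 1))); split;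
    [apply Rmin_pos; auto; apply Rdiv_lt_0_compat; pose proof (Rabs_pos B); lra|].
  intros w Hw; rewrite slope_at; destruct (Ceq_dec w a) as [-> | Hne].
  - rewrite slope_at; replace (Csub c2 c2) with C0 by ring; rewrite Cnorm_C0; auto.
  - rewrite !slope_ne, slope_at by auto.
    assert (Hwr : Cnorm (Csub w a) < rho) by (eapply Rlt_le_trans; [apply Hw | apply Rmin_l]).
    assert (Hwe : Cnorm (Csub w a) < e / (Rabs B + 1)) by (eapply Rlt_le_trans; [apply Hw | apply Rmin_r]).
    specialize (HB w Hwr); set (h := Csub w a) in *.
    assert (Hh : h <> C0) by (apply sub_neq0; auto); pose proof (Cnorm_pos _ Hh) as Hhp.
    replace (Csub (Cdiv (Csub (Cdiv (Csub (u w) (u a)) h) c1) h) c2)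
      with (Cdiv (Csub (u w) (quadratic (u a) c1 c2 h)) (Cmul h h)) by (unfold quadratic; field; auto).
    rewrite Cnorm_div, Cnorm_mul by (apply Cmul_neq0; auto).
    apply Rle_lt_trans with (Rabs B * Cnorm h).
    + apply Rmult_le_reg_r with (Cnorm h * Cnorm h); [nra|].
      unfold Rdiv; rewrite Rmult_assoc, Rinv_l, Rmult_1_r by nra.
      assert (Hh3 : 0 <= Cnorm h ^ 3) by (apply pow_le; lra).
      pose proof (Rle_abs B).
      replace (Rabs B * Cnorm h * (Cnorm h * Cnorm h)) with (Rabs B * Cnorm h ^ 3) by ring.
      nra.
    + replace e with ((Rabs B + 1) * (e / (Rabs B + 1))) by (field; pose proof (Rabs_pos B); lra).
      pose proof (Rabs_pos B); nra.
Qed.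

(** * Cauchy transforms over a square have second-order expansions

   For [G] differentiable on the closed square of centre a = (ax, ay) and
   half-side r, and |z - a| < r / 2, expand the Cauchy kernel
     1/(w-z) = 1/(w-a) + h/(w-a)^2 + h^2/(w-a)^3 + h^3/((w-a)^3 (w-z)),   h = z - a;
   the last term stays bounded since w on the boundary is at distance >= r/2 from z. *)

Section Square.
Variables (ax ay r : R).
Hypothesis Hr : 0 < r.

Let bd := on_boundary (ax - r) (ax + r) (ay - r) (ay + r).

Lemma bd_far (x y : R) : bd x y -> r <= Cnorm (Csub (x, y) (ax, ay)).
Proof.
  intro Hb; pose proof (Cnorm_fst (Csub (x, y) (ax, ay))) as Hf.
  pose proof (Cnorm_snd (Csub (x, y) (ax, ay))) as Hs; simpl in Hf, Hs.
  destruct Hb as [[_ [-> | ->]] | [_ [-> | ->]]];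
    [ replace (ay - r + - ay) with (- r) in Hs by ring; rewrite Rabs_Ropp in Hs
    | replace (ay + r + - ay) with r in Hs by ring
    | replace (ax - r + - ax) with (- r) in Hf by ring; rewrite Rabs_Ropp in Hf
    | replace (ax + r + - ax) with r in Hf by ring ];
    rewrite Rabs_right in * by lra; lra.
Qed.

Lemma bd_z (x y : R) (z : Cpx) : bd x y -> Cnorm (Csub z (ax, ay)) < r / 2 ->
  r / 2 <= Cnorm (Csub (x, y) z).
Proof.
  intros Hb Hz; pose proof (bd_far x y Hb).
  pose proof (Cnorm_sub_tri (Csub (x, y) (ax, ay)) (Csub z (ax, ay))) as Ht.
  replace (Csub (Csub (x, y) (ax, ay)) (Csub z (ax, ay))) with (Csub (x, y) z) in Ht by ring; lra.
Qed.

Lemma bd_nez (x y : R) (z : Cpx) : bd x y -> Cnorm (Csub z (ax, ay)) < r / 2 -> (x, y) <> z.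
Proof.
  intros Hb Hz E; pose proof (bd_z x y z Hb Hz) as Hf; rewrite E in Hf.
  replace (Csub z z) with C0 in Hf by ring; rewrite Cnorm_C0 in Hf; lra.
Qed.

Lemma center_near : Cnorm (Csub (ax, ay) (ax, ay)) < r / 2.
Proof. replace (Csub (ax, ay) (ax, ay)) with C0 by ring; rewrite Cnorm_C0; lra. Qed.

Lemma sq_bcont (f : Cpx -> Cpx) : (forall x y, bd x y -> cdiff f (x, y)) ->
  bcont f (ax - r) (ax + r) (ay - r) (ay + r).
Proof. intro Hf; repeat split; try lra; intros; apply cdiff_cont, Hf; auto. Qed.
End Square.

Section CauchyTransform.
Variables (G : Cpx -> Cpx) (ax ay r : R).
Hypothesis Hr : 0 < r.
Hypothesis Hd : forall x y, ax - r <= x <= ax + r -> ay - r <= y <= ay + r -> cdiff G (x, y).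

Let bd := on_boundary (ax - r) (ax + r) (ay - r) (ay + r).

Lemma bd_cdiff (x y : R) : bd x y -> cdiff G (x, y).
Proof.
  intro Hb; destruct (on_boundary_in (ax - r) (ax + r) (ay - r) (ay + r) x y) as [Hx Hy];
    try lra; auto.
Qed.

Definition kpow (k : nat) (w : Cpx) : Cpx := Cmul (G w) (Cpow (Cinv (Csub w (ax, ay))) k).
Definition krem (z w : Cpx) : Cpx := Cmul (kpow 3 w) (Cinv (Csub w z)).
Definition Jk (k : nat) : Cpx := cint (kpow k) (ax - r) (ax + r) (ay - r) (ay + r).
Definition Ez (z : Cpx) : Cpx := cint (krem z) (ax - r) (ax + r) (ay - r) (ay + r).

Lemma kpow_bcont (k : nat) : bcont (kpow k) (ax - r) (ax + r) (ay - r) (ay + r).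
Proof.
  apply (sq_bcont ax ay r Hr); intros x y Hb; apply cdiff_mul; [apply bd_cdiff; auto|].
  apply cdiff_pow, cdiff_kernel, (bd_nez ax ay r Hr x y (ax, ay) Hb (center_near ax ay r Hr)).
Qed.

Lemma krem_bcont (z : Cpx) : Cnorm (Csub z (ax, ay)) < r / 2 ->
  bcont (krem z) (ax - r) (ax + r) (ay - r) (ay + r).
Proof.
  intro Hz; apply (sq_bcont ax ay r Hr); intros x y Hb; apply cdiff_mul.
  - apply cdiff_mul; [apply bd_cdiff; auto|].
    apply cdiff_pow, cdiff_kernel, (bd_nez ax ay r Hr x y (ax, ay) Hb (center_near ax ay r Hr)).
  - apply cdiff_kernel, (bd_nez ax ay r Hr); auto.
Qed.

Lemma kernel_expansion (z w : Cpx) : w <> (ax, ay) -> w <> z ->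
  Cmul (G w) (Cinv (Csub w z)) =
  Cadd (Cadd (Cadd (kpow 1 w) (Cmul (Csub z (ax, ay)) (kpow 2 w)))
             (Cmul (Cmul (Csub z (ax, ay)) (Csub z (ax, ay))) (kpow 3 w)))
       (Cmul (Cmul (Csub z (ax, ay)) (Cmul (Csub z (ax, ay)) (Csub z (ax, ay)))) (krem z w)).
Proof. intros Ha Hz; unfold krem, kpow; simpl; field; split; apply sub_neq0; auto. Qed.

Lemma cauchy_transform_expansion (z : Cpx) : Cnorm (Csub z (ax, ay)) < r / 2 ->
  cint (fun w => Cmul (G w) (Cinv (Csub w z))) (ax - r) (ax + r) (ay - r) (ay + r) =
  Cadd (Cadd (Cadd (Jk 1) (Cmul (Csub z (ax, ay)) (Jk 2)))
             (Cmul (Cmul (Csub z (ax, ay)) (Csub z (ax, ay))) (Jk 3)))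
       (Cmul (Cmul (Csub z (ax, ay)) (Cmul (Csub z (ax, ay)) (Csub z (ax, ay)))) (Ez z)).
Proof.
  intro Hz; unfold Jk, Ez.
  rewrite <- !cint_scal, <- !cint_add;
    repeat first [ apply bcont_add | apply bcont_scal | apply kpow_bcont | apply krem_bcont; auto ].
  apply cint_ext;
    repeat first [ apply bcont_add | apply bcont_scal | apply kpow_bcont | apply krem_bcont; auto ].
  - apply (sq_bcont ax ay r Hr); intros x y Hb; apply cdiff_mul; [apply bd_cdiff; auto|].
    apply cdiff_kernel, (bd_nez ax ay r Hr); auto.
  - intros x y Hb; apply kernel_expansion; [apply (bd_nez ax ay r Hr x y (ax, ay) Hb (center_near ax ay r Hr)) | apply (bd_nez ax ay r Hr); auto].
Qed.

Lemma Ez_bound : exists B, forall z, Cnorm (Csub z (ax, ay)) < r / 2 -> Cnorm (Ez z) <= B.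
Proof.
  destruct (bcont_max _ _ _ _ _ (kpow_bcont 3)) as [M HM].
  exists (4 * (Rabs M * (2 / r)) * ((ax + r - (ax - r)) + (ay + r - (ay - r)))); intros z Hz.
  apply cint_bound; [apply krem_bcont; auto|]; intros x y Hb; unfold krem.
  rewrite Cnorm_mul, Cnorm_inv by (apply sub_neq0, (bd_nez ax ay r Hr); auto).
  pose proof (bd_z ax ay r Hr x y z Hb Hz); specialize (HM x y Hb); pose proof (Rle_abs M).
  apply Rmult_le_compat; [apply Cnorm_ge0 | left; apply Rinv_0_lt_compat; lra | lra |].
  replace (2 / r) with (/ (r / 2)) by (field; lra); apply Rinv_le_contravar; lra.
Qed.

Theorem cauchy_transform_taylor2 :
  taylor2 (fun z => cint (fun w => Cmul (G w) (Cinv (Csub w z))) (ax - r) (ax + r) (ay - r) (ay + r))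
          (ax, ay).
Proof.
  destruct Ez_bound as [B HB]; exists (Jk 2), (Jk 3), (r / 2), B; split; [lra|]; intros z Hz.
  rewrite (cauchy_transform_expansion z Hz), (cauchy_transform_expansion (ax, ay) (center_near ax ay r Hr)).
  replace (Csub (ax, ay) (ax, ay)) with C0 by ring.
  set (h := Csub z (ax, ay)) in *; unfold quadratic.
  replace (Csub _ _) with (Cmul (Cmul h (Cmul h h)) (Ez z)) by ring.
  rewrite !Cnorm_mul; specialize (HB z Hz).
  replace (Cnorm h * (Cnorm h * Cnorm h)) with (Cnorm h ^ 3) by ring.
  assert (0 <= Cnorm h ^ 3) by (apply pow_le, Cnorm_ge0); nra.
Qed.
End CauchyTransform.

(** * The winding integral around a square does not vanish

   The imaginary part of the integral of 1/(w - a) around the square of centre a and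
   half-side r is at least 4 (it is 2 pi): on each edge the relevant component of the
   integrand is r / (s^2 + r^2) >= 1 / (2 r), integrated over a length 2 r. *)

Lemma frac_lb (s r : R) : 0 < r -> s * s <= r * r -> / (2 * r) <= r / (s * s + r * r).
Proof.
  intros Hr Hs; apply Rmult_le_reg_l with (2 * r * (s * s + r * r));
    [apply Rmult_lt_0_compat; nra|].
  replace (2 * r * (s * s + r * r) * / (2 * r)) with (s * s + r * r) by (field; lra).
  replace (2 * r * (s * s + r * r) * (r / (s * s + r * r))) with (2 * r * r) by (field; nra).
  nra.
Qed.

Lemma cint_snd (phi : Cpx -> Cpx) (x0 x1 y0 y1 : R) : snd (cint phi x0 x1 y0 y1) =
  RI (fun t => snd (phi (t, y0))) x0 x1 - RI (fun t => snd (phi (t, y1))) x0 x1 +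
  (RI (fun t => fst (phi (x1, t))) y0 y1 - RI (fun t => fst (phi (x0, t))) y0 y1).
Proof. unfold cint, CI, Ci, Cadd, Csub, Cmul, Copp; simpl; ring. Qed.

Section Winding.
Variables (ax ay r : R).
Hypothesis Hr : 0 < r.

Let kernel := fun w => Cinv (Csub w (ax, ay)).

Lemma kernel_bcont : bcont kernel (ax - r) (ax + r) (ay - r) (ay + r).
Proof.
  apply (sq_bcont ax ay r Hr); intros x y Hb.
  apply cdiff_kernel, (bd_nez ax ay r Hr); auto; apply center_near; auto.
Qed.

Lemma kernel_hedges :
  2 <= RI (fun t => snd (kernel (t, ay - r))) (ax - r) (ax + r)
       - RI (fun t => snd (kernel (t, ay + r))) (ax - r) (ax + r).
Proof.
  pose proof (cint1_snd _ _ _ (edge_bot _ _ _ _ _ kernel_bcont)) as Hbot.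
  pose proof (cint1_snd _ _ _ (edge_top _ _ _ _ _ kernel_bcont)) as Htop.
  assert (L1 : / (2 * r) * (ax + r - (ax - r)) <= RI (fun t => snd (kernel (t, ay - r))) (ax - r) (ax + r)).
  { apply RI_lower; auto; intros t Ht; unfold kernel, Cinv, Csub, Cadd, Copp; simpl.
    replace (- (ay - r + - ay)) with r by ring.
    replace ((ay - r + - ay) * (ay - r + - ay)) with (r * r) by ring.
    apply frac_lb; nra. }
  assert (L2 : RI (fun t => snd (kernel (t, ay + r))) (ax - r) (ax + r) <= - / (2 * r) * (ax + r - (ax - r))).
  { apply RI_upper; auto; intros t Ht; unfold kernel, Cinv, Csub, Cadd, Copp; simpl.
    replace (- (ay + r + - ay)) with (- r) by ring.
    replace ((ay + r + - ay) * (ay + r + - ay)) with (r * r) by ring.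
    pose proof (frac_lb (t + - ax) r Hr ltac:(nra)); unfold Rdiv in *; lra. }
  replace (/ (2 * r) * (ax + r - (ax - r))) with 1 in L1 by (field; lra).
  replace (- / (2 * r) * (ax + r - (ax - r))) with (-1) in L2 by (field; lra).
  lra.
Qed.

Lemma kernel_vedges :
  2 <= RI (fun t => fst (kernel (ax + r, t))) (ay - r) (ay + r)
       - RI (fun t => fst (kernel (ax - r, t))) (ay - r) (ay + r).
Proof.
  pose proof (cint1_fst _ _ _ (edge_right _ _ _ _ _ kernel_bcont)) as Hright.
  pose proof (cint1_fst _ _ _ (edge_left _ _ _ _ _ kernel_bcont)) as Hleft.
  assert (L3 : / (2 * r) * (ay + r - (ay - r)) <= RI (fun t => fst (kernel (ax + r, t))) (ay - r) (ay + r)).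
  { apply RI_lower; auto; intros t Ht; unfold kernel, Cinv, Csub, Cadd, Copp; simpl.
    replace (ax + r + - ax) with r by ring.
    replace (r * r + (t + - ay) * (t + - ay)) with ((t + - ay) * (t + - ay) + r * r) by ring.
    apply frac_lb; nra. }
  assert (L4 : RI (fun t => fst (kernel (ax - r, t))) (ay - r) (ay + r) <= - / (2 * r) * (ay + r - (ay - r))).
  { apply RI_upper; auto; intros t Ht; unfold kernel, Cinv, Csub, Cadd, Copp; simpl.
    replace (ax - r + - ax) with (- r) by ring.
    replace (- r * - r + (t + - ay) * (t + - ay)) with ((t + - ay) * (t + - ay) + r * r) by ring.
    pose proof (frac_lb (t + - ay) r Hr ltac:(nra)); unfold Rdiv in *; lra. }
  replace (/ (2 * r) * (ay + r - (ay - r))) with 1 in L3 by (field; lra).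
  replace (- / (2 * r) * (ay + r - (ay - r))) with (-1) in L4 by (field; lra).
  lra.
Qed.

Theorem winding_nonzero : cint kernel (ax - r) (ax + r) (ay - r) (ay + r) <> C0.
Proof.
  intro E; pose proof kernel_hedges; pose proof kernel_vedges.
  assert (Hs : snd (cint kernel (ax - r) (ax + r) (ay - r) (ay + r)) = 0) by (rewrite E; reflexivity).
  rewrite cint_snd in Hs; lra.
Qed.
End Winding.

Lemma square_in_disk (ax ay : R) : inD (ax, ay) ->
  exists r, 0 < r /\ forall x y, ax - r <= x <= ax + r -> ay - r <= y <= ay + r -> inD (x, y).
Proof.
  unfold inD; intro Ha; set (r := (1 - Cnorm (ax, ay)) / 4).
  exists r; split; [unfold r; lra|]; intros x y Hx Hy.
  pose proof (Cnorm_tri (Csub (x, y) (ax, ay)) (ax, ay)) as Ht.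
  replace (Cadd (Csub (x, y) (ax, ay)) (ax, ay)) with (x, y) in Ht by (apply Cpx_eq; simpl; ring).
  assert (Cnorm (Csub (x, y) (ax, ay)) <= r + r) by (apply Cnorm_box; apply Rabs_le; lra).
  unfold r in *; lra.
Qed.

Lemma near_centre_interior (ax ay r : R) (z : Cpx) : Cnorm (Csub z (ax, ay)) < r / 2 ->
  ax - r < fst z < ax + r /\ ay - r < snd z < ay + r.
Proof.
  destruct z as [zx zy]; intro Hz.
  pose proof (Cnorm_fst (Csub (zx, zy) (ax, ay))) as Hf.
  pose proof (Cnorm_snd (Csub (zx, zy) (ax, ay))) as Hs; simpl in Hf, Hs |- *.
  assert (Hx : Rabs (zx + - ax) < r / 2) by lra; assert (Hy : Rabs (zy + - ay) < r / 2) by lra.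
  apply Rabs_def2 in Hx; apply Rabs_def2 in Hy; lra.
Qed.

(* Holomorphic functions have second-order expansions: by the Cauchy formula,
   F z * D z = N z near a, with N, D Cauchy transforms over a square and D a <> 0. *)
Theorem holo_taylor2 (F : Cpx -> Cpx) (a : Cpx) : holo F -> inD a -> taylor2 F a.
Proof.
  destruct a as [ax ay]; intros HF Ha.
  destruct (square_in_disk ax ay Ha) as [r [Hr Hsq]].
  assert (Hd : forall x y, ax - r <= x <= ax + r -> ay - r <= y <= ay + r -> cdiff F (x, y))
    by (intros; apply holo_cdiff; auto).
  set (D := fun z => cint (fun w => Cmul C1 (Cinv (Csub w z))) (ax - r) (ax + r) (ay - r) (ay + r)).
  assert (HD : forall z, D z = cint (fun w => Cinv (Csub w z)) (ax - r) (ax + r) (ay - r) (ay + r)).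
  { intro z; unfold D; f_equal; apply functional_extensionality; intro; ring. }
  set (N := fun z => cint (fun w => Cmul (F w) (Cinv (Csub w z))) (ax - r) (ax + r) (ay - r) (ay + r)).
  apply (taylor2_factor F N D (ax, ay) (r / 2)); [lra | | | |].
  - intros z Hz; rewrite HD; destruct (near_centre_interior ax ay r z Hz) as [Hzx Hzy].
    unfold N; rewrite (surjective_pairing z); apply cauchy; auto.
  - apply cauchy_transform_taylor2; auto.
  - apply (cauchy_transform_taylor2 (fun _ => C1)); auto; intros; apply cdiff_const.
  - rewrite HD; apply winding_nonzero; auto.
Qed.

(* At a this is the second-order expansion;
   elsewhere it is a quotient of holomorphic functions. *)
Theorem holo_slope (F : Cpx -> Cpx) (a : Cpx) : holo F -> inD a ->
  exists l, cdif F a l /\ holo (slope F a l).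
Proof.
  intros HF Ha; destruct (taylor2_slope F a (holo_taylor2 F a HF Ha)) as [l [l2 Hl]].
  exists l; split.
  - exact (cdif_cont _ _ _ Hl).
  - apply holo_intro; intros z Hz; destruct (Ceq_dec z a) as [-> | Hne].
    + exists l2; exact Hl.
    + apply slope_cdiff; auto; apply holo_cdiff; auto.
Qed.

(* If psi has a simple zero at a and no other zero in D, and f a = 0, then f / psi
   extends holomorphically: f = (z - a) Qf and psi = (z - a) Qp with Qp zero-free. *)
Theorem holo_quotient (f psi : Cpx -> Cpx) (a : Cpx) :
  holo f -> holo psi -> inD a -> f a = C0 -> psi a = C0 ->
  (forall l, has_cderiv psi a l -> l <> C0) ->
  (forall z, inD z -> psi z = C0 -> z = a) ->
  exists g, holo g /\ forall z, inD z -> Cmul (g z) (psi z) = f z.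
Proof.
  intros Hf Hpsi Ha Hfa Hpa Hder Hzero.
  destruct (holo_slope f a Hf Ha) as [lf [_ HQf]]; set (Qf := slope f a lf) in *.
  destruct (holo_slope psi a Hpsi Ha) as [lp [Hlp HQp]]; set (Qp := slope psi a lp) in *.
  assert (Ef : forall z, f z = Cmul (Qf z) (Csub z a)).
  { intro z; rewrite (slope_id f a lf z), Hfa; unfold Qf; ring. }
  assert (Ep : forall z, psi z = Cmul (Qp z) (Csub z a)).
  { intro z; rewrite (slope_id psi a lp z), Hpa; unfold Qp; ring. }
  assert (HQp0 : forall z, inD z -> Qp z <> C0).
  { intros z Hz E; destruct (Ceq_dec z a) as [-> | Hne].
    - apply (Hder lp (cdif_has_cderiv _ _ _ Hlp)); unfold Qp in E; rewrite slope_at in E; exact E.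
    - apply Hne, Hzero; auto; rewrite Ep, E; ring. }
  exists (fun z => Cmul (Qf z) (Cinv (Qp z))); split.
  - apply holo_intro; intros z Hz; apply cdiff_mul; [apply holo_cdiff; auto|].
    apply cdiff_inv; [apply holo_cdiff|]; auto.
  - intros z Hz; rewrite Ef, Ep; field; apply HQp0; auto.
Qed.

(** * Cusp algebras *)

Section CuspAlgebra.
Variable A : (Cpx -> Cpx) -> Prop.
Hypothesis HA : unital_subalgebra A.

Lemma subalg_const (c : Cpx) : A (fun _ => c).
Proof.
  destruct HA as [_ [Hext [H1 [_ [Hsc _]]]]].
  apply Hext with (fun _ => Cmul c C1); [apply Hsc; auto | intros; ring].
Qed.

Lemma subalg_power_one_minus (psi : Cpx -> Cpx) (c : Cpx) (k : nat) : A psi ->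
  exists p, A p /\ forall z, Cpow (Csub C1 (Cmul c (psi z))) k = Csub C1 (Cmul (psi z) (p z)).
Proof.
  destruct HA as [_ [_ [_ [Hadd [Hsc Hmul]]]]]; intro Hpsi.
  induction k as [|k [p [Ap Ep]]].
  - exists (fun _ => C0); split; [apply subalg_const | intros; simpl; ring].
  - exists (fun z => Cadd (Cadd c (p z)) (Cmul (Copp c) (Cmul (psi z) (p z)))).
    split.
    + apply Hadd; [apply Hadd; [apply subalg_const | exact Ap] | apply (Hsc (Copp c)); apply Hmul; auto].
    + intro z; simpl; rewrite Ep; ring.
Qed.

(* Write 1 - psi / psi(0) = z rho; then (1 - psi / psi(0))^m = 1 - psi p with p in A,
   so g = g (1 - psi p) + f p = z^m (g rho^m) + f p. *)
Theorem cusp_division (m : nat) (psi f g : Cpx -> Cpx) :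
  (forall h, holo h -> A (fun z => Cmul (Cpow z m) (h z))) ->
  A psi -> psi C0 <> C0 -> A f -> holo g ->
  (forall z, inD z -> Cmul (g z) (psi z) = f z) -> A g.
Proof.
  intros Hcusp Hpsi Hc Hf Hg Hgpsi; pose proof HA as [Hholo [Hext [_ [Hadd [_ Hmul]]]]].
  assert (In0 : inD C0) by (unfold inD; rewrite Cnorm_C0; lra).
  set (c := psi C0) in *.
  destruct (holo_slope psi C0 (Hholo psi Hpsi) In0) as [l [_ HQ]]; set (Q := slope psi C0 l) in *.
  destruct (subalg_power_one_minus psi (Cinv c) m Hpsi) as [p [Ap Ep]].
  set (rho := fun z => Cmul (Copp (Cinv c)) (Q z)).
  assert (Hu : forall z, Csub C1 (Cmul (Cinv c) (psi z)) = Cmul z (rho z)).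
  { intro z; unfold rho, Q; rewrite (slope_id psi C0 l z); fold c; field; auto. }
  assert (Hgrho : holo (fun z => Cmul (g z) (Cpow (rho z) m))).
  { apply holo_intro; intros z Hz; apply cdiff_mul; [apply holo_cdiff; auto|].
    apply cdiff_pow, cdiff_mul; [apply cdiff_const | apply holo_cdiff; auto]. }
  apply Hext with (fun z => Cadd (Cmul (f z) (p z)) (Cmul (Cpow z m) (Cmul (g z) (Cpow (rho z) m)))).
  { apply Hadd; [apply Hmul; auto | apply Hcusp; auto]. }
  intros z Hz.
  rewrite <- (Hgpsi z Hz).
  replace (Cmul (Cpow z m) (Cmul (g z) (Cpow (rho z) m))) with (Cmul (g z) (Cpow (Cmul z (rho z)) m))
    by (rewrite Cpow_mul; ring).
  rewrite <- Hu, Ep; ring.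
Qed.
End CuspAlgebra.

(* Lemma 5.3: in a cusp algebra, f in A with f(alpha) = 0 is divisible in A by a function
   psi in A with a simple zero at alpha and no other zero. *)
Theorem lemma5p3 (A : (Cpx -> Cpx) -> Prop) (alpha : Cpx) (psi f : Cpx -> Cpx) :
  cusp_algebra A -> simple_cusp A ->
  inD alpha -> alpha <> C0 ->
  A psi ->
  psi alpha = C0 ->
  (forall l, has_cderiv psi alpha l -> l <> C0) ->
  (forall z, inD z -> psi z = C0 -> z = alpha) ->
  A f -> f alpha = C0 ->
  exists g, A g /\ forall z, inD z -> z <> alpha -> g z = Cdiv (f z) (psi z).
Proof.
  intros [HA [_ [m [_ Hcusp]]]] _ Hal Hal0 Hpsi Hpa Hder Hzero Hf Hfa.
  pose proof HA as [Hholo _].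
  destruct (holo_quotient f psi alpha (Hholo f Hf) (Hholo psi Hpsi) Hal Hfa Hpa Hder Hzero)
    as [g [Hg Hgpsi]].
  assert (Hpsi0 : psi C0 <> C0).
  { intro E; apply Hal0; symmetry; apply Hzero; auto; unfold inD; rewrite Cnorm_C0; lra. }
  exists g; split; [exact (cusp_division A HA m psi f g Hcusp Hpsi Hpsi0 Hf Hg Hgpsi)|].
  intros z Hz Hne; rewrite <- (Hgpsi z Hz); field.
  intro E; apply Hne, Hzero; auto.
Qed.
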